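(* Let $p\ge0$, $\Omega,K>0$, $S\in\mathcal B_{\Omega,K}$, and for $x\in[0,\pi]$ let $\psi(x)=(E+\tilde H(x))^{-1}\tilde\psi(x)\in m$ and $g(x)=\tilde Q(x)T^{-1}\psi(x)$. Then for each $x\in[0,\pi]$, $n\ge1$, $i\in\{0,1\}$, with $C$ depending only on $p,\Omega,K$: (1) $|\psi_{ni}(x)|\le C$; (2) $|g_{ni}(x)|\le C$; (3) $\{g_{ni}(x)\}\in l_2$ and $\|\{g_{ni}(x)\}\|_{l_2}\le C$; (4) $\{g_{n0}(x)-g_{n1}(x)\}_{n\ge1}\in l_1$ and $\sum_n|g_{n0}(x)-g_{n1}(x)|\le C$.
   Context: $\mathcal S_p$: collections $S=\{\lambda_n,\alpha_n\}_{n\ge1}$ of complex numbers with $\rho_n:=\sqrt{\lambda_n}$ ($\arg\rho_n\in[-\pi/2,\pi/2)$), $\rho_n=n-p-1+\varkappa_n$, $\alpha_n=2/\pi+\kappa_n$, $\{\varkappa_n\},\{\kappa_n\}\in l_2$. Model data: $\tilde\rho_n=0$ for $n\le p+1$, $\tilde\rho_n=n-p-1$ for $n\ge p+1$, $\tilde\lambda_n=\tilde\rho_n^2$; $\tilde\alpha_1=1/\pi$, $\tilde\alpha_n=0$ for $2\le n\le p+1$, $\tilde\alpha_n=2/\pi$ for $n\ge p+2$. $\xi_n=|\rho_n-\tilde\rho_n|+|\alpha_n-\tilde\alpha_n|$, $\mathcal B_\Omega=\{S\in\mathcal S_p:(\sum\xi_n^2)^{1/2}\le\Omega\}$. Notation: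 $\lambda_{n0}=\lambda_n,\rho_{n0}=\rho_n,\alpha_{n0}=\alpha_n$, $\lambda_{n1}=\tilde\lambda_n,\rho_{n1}=\tilde\rho_n,\alpha_{n1}=\tilde\alpha_n$, $\hat\rho_n=\rho_n-\tilde\rho_n$; $\tilde\varphi_{ni}(x)=\cos(\rho_{ni}x)$; $\tilde D(x,\lambda,\mu)=\int_0^x\cos(\sqrt\lambda t)\cos(\sqrt\mu t)dt$; $\tilde Q_{ni,kj}(x)=\alpha_{kj}\tilde D(x,\rho_{ni}^2,\rho_{kj}^2)$; $\tilde Q_{nk}=\begin{pmatrix}\tilde Q_{n0,k0}&-\tilde Q_{n0,k1}\\ \tilde Q_{n1,k0}&-\tilde Q_{n1,k1}\end{pmatrix}$; $T_k^{-1}=\begin{pmatrix}\hat\rho_k&1\\0&1\end{pmatrix}$; for $\hat\rho_n\neq0$, $T_n=\begin{pmatrix}\hat\rho_n^{-1}&-\hat\rho_n^{-1}\\0&1\end{pmatrix}$. $\tilde\psi_n=T_n(\tilde\varphi_{n0},\tilde\varphi_{n1})^T$ if $\hat\rho_n\ne0$, $\tilde\psi_n=(-x\sin(\rho_{n1}x),\cos(\rho_{n1}x))^T$ if $\hat\rho_n=0$; $\tilde\psi=(\tilde\psi_n)_{n\ge1}$. $\tilde H_{nk}=T_n\tilde Q_{nk}T_k^{-1}$ if $\hat\rho_n\neq0$; $\tilde H_{nk}=\begin{pmatrix}\partial_\rho[\alpha_{k0}\tilde D(x,\rho^2,\lambda_{k0})]_{\rho=\rho_{n0}}&-\partial_\rho[\alpha_{k1}\tilde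 D(x,\rho^2,\lambda_{k1})]_{\rho=\rho_{n0}}\\ \tilde Q_{n1,k0}&-\tilde Q_{n1,k1}\end{pmatrix}T_k^{-1}$ if $\hat\rho_n=0$. $m$: Banach space of bounded sequences $(a_{ni})_{n\ge1,i=0,1}$ with sup norm; $(\tilde H(x)a)_n=\sum_k\tilde H_{nk}(x)a_k$; $E$ identity; for $f\in m$, $(T^{-1}f)_n=(\hat\rho_nf_{n0}+f_{n1},f_{n1})^T$, $(\tilde Q(x)T^{-1}f)_n=\sum_k\tilde Q_{nk}(x)T_k^{-1}f_k$. $\mathcal B_{\Omega,K}=\{S\in\mathcal B_\Omega:$ for every $x\in[0,\pi]$, $E+\tilde H(x)$ is invertible on $m$ and $\|(E+\tilde H(x))^{-1}\|_{m\to m}\le K\}$. *)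

From Stdlib Require Import Reals Lra Arith.
From Coquelicot Require Import Coquelicot.

Open Scope R_scope.

(* cos(a+ib) = cos a cosh b - i sin a sinh b ; sin(a+ib) = sin a cosh b + i cos a sinh b *)
Definition ccos (z : C) : C := (cos (fst z) * cosh (snd z), - (sin (fst z) * sinh (snd z))).
Definition csin (z : C) : C := (sin (fst z) * cosh (snd z), cos (fst z) * sinh (snd z)).

(* The square root with arg in [-pi/2, pi/2): the unique rho with rho^2 = w and
   (Re rho > 0) or (Re rho = 0 and Im rho <= 0). *)
Definition csqrt (w : C) : C :=
  let r := Cmod w in
  (sqrt ((r + fst w) / 2),
   match Rlt_dec 0 (snd w) with
   | left _ => sqrt ((r - fst w) / 2)
   | right _ => - sqrt ((r - fst w) / 2)
   end).

(** * 2x2 complex matrices / vectors.  A vector (v0, v1) : C * C stores the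
    components with index i = 0 (fst) and i = 1 (snd). *)
Definition vec2 := (C * C)%type.
Definition mat2 := ((C * C) * (C * C))%type.   (* ((a11,a12),(a21,a22)) *)

Definition mv (M : mat2) (v : vec2) : vec2 :=
  ((fst (fst M) * fst v + snd (fst M) * snd v)%C,
   (fst (snd M) * fst v + snd (snd M) * snd v)%C).

Definition mm (A B : mat2) : mat2 :=
  (((fst (fst A) * fst (fst B) + snd (fst A) * fst (snd B))%C,
    (fst (fst A) * snd (fst B) + snd (fst A) * snd (snd B))%C),
   ((fst (snd A) * fst (fst B) + snd (snd A) * fst (snd B))%C,
    (fst (snd A) * snd (fst B) + snd (snd A) * snd (snd B))%C)).

(** * Spectral data S = {lambda_n, alpha_n}_{n>=1} (index 0 of the sequences is unused)
    and the model data.  Indices i = 0,1 are encoded by bool: false = 0, true = 1. *)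

Definition rho (lam : nat -> C) (n : nat) : C := csqrt (lam n).

Definition rhot (p n : nat) : R := if (n <=? p + 1)%nat then 0 else INR n - INR p - 1.

Definition alphat (p n : nat) : R :=
  if (n =? 1)%nat then 1 / PI else if (n <=? p + 1)%nat then 0 else 2 / PI.

Definition rhohat (p : nat) (lam : nat -> C) (n : nat) : C :=
  (rho lam n - RtoC (rhot p n))%C.

Definition rhoi (p : nat) (lam : nat -> C) (n : nat) (i : bool) : C :=
  if i then RtoC (rhot p n) else rho lam n.
Definition lami (p : nat) (lam : nat -> C) (n : nat) (i : bool) : C :=
  if i then RtoC (rhot p n * rhot p n) else lam n.
Definition alphai (p : nat) (alpha : nat -> C) (n : nat) (i : bool) : C :=
  if i then RtoC (alphat p n) else alpha n.

Definition l2seq (a : nat -> C) : Prop := ex_series (fun j => Cmod (a (S j)) ^ 2).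

Definition in_Sp (p : nat) (lam alpha : nat -> C) : Prop :=
  exists varkappa kappa : nat -> C,
    l2seq varkappa /\ l2seq kappa /\
    forall n : nat, (1 <= n)%nat ->
      rho lam n = (RtoC (INR n - INR p - 1) + varkappa n)%C /\
      alpha n = (RtoC (2 / PI) + kappa n)%C.

Definition xi (p : nat) (lam alpha : nat -> C) (n : nat) : R :=
  Cmod (rho lam n - RtoC (rhot p n)) + Cmod (alpha n - RtoC (alphat p n)).

Definition in_BOmega (p : nat) (Omega : R) (lam alpha : nat -> C) : Prop :=
  in_Sp p lam alpha /\
  ex_series (fun j => xi p lam alpha (S j) ^ 2) /\
  sqrt (Series (fun j => xi p lam alpha (S j) ^ 2)) <= Omega.

Definition Dt (x : R) (l m : C) : C :=
  @RInt C_R_CompleteNormedModule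
    (fun t => (ccos (csqrt l * RtoC t) * ccos (csqrt m * RtoC t))%C) 0 x.

(* d/d rho [ D~(x, rho^2, mu) ] evaluated at rho = r :
   int_0^x (- t sin(r t)) cos(sqrt(mu) t) dt *)
Definition dDt (x : R) (r m : C) : C :=
  @RInt C_R_CompleteNormedModule
    (fun t => (RtoC (- t) * csin (r * RtoC t) * ccos (csqrt m * RtoC t))%C) 0 x.

Definition Qt (p : nat) (lam alpha : nat -> C) (x : R) (n : nat) (i : bool) (k : nat) (j : bool) : C :=
  (alphai p alpha k j * Dt x (lami p lam n i) (lami p lam k j))%C.

Definition Qmat (p : nat) (lam alpha : nat -> C) (x : R) (n k : nat) : mat2 :=
  ((Qt p lam alpha x n false k false, (- Qt p lam alpha x n false k true)%C),
   (Qt p lam alpha x n true k false, (- Qt p lam alpha x n true k true)%C)).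

Definition Tinv (p : nat) (lam : nat -> C) (k : nat) : mat2 :=
  ((rhohat p lam k, RtoC 1), (RtoC 0, RtoC 1)).

(* T_n, used only when rhohat_n <> 0 *)
Definition Tmat (p : nat) (lam : nat -> C) (n : nat) : mat2 :=
  ((Cinv (rhohat p lam n), (- Cinv (rhohat p lam n))%C), (RtoC 0, RtoC 1)).

Definition rhohat_is0 (p : nat) (lam : nat -> C) (n : nat) : bool :=
  if Req_EM_T (Cmod (rhohat p lam n)) 0 then true else false.

Definition Hmat (p : nat) (lam alpha : nat -> C) (x : R) (n k : nat) : mat2 :=
  if rhohat_is0 p lam n then
    mm (((alphai p alpha k false * dDt x (rho lam n) (lami p lam k false))%C,
         (- (alphai p alpha k true * dDt x (rho lam n) (lami p lam k true)))%C),
        (Qt p lam alpha x n true k false, (- Qt p lam alpha x n true k true)%C))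
       (Tinv p lam k)
  else mm (mm (Tmat p lam n) (Qmat p lam alpha x n k)) (Tinv p lam k).

Definition psit (p : nat) (lam : nat -> C) (x : R) (n : nat) : vec2 :=
  if rhohat_is0 p lam n then
    ((RtoC (- x) * csin (RtoC (rhot p n) * RtoC x))%C, ccos (RtoC (rhot p n) * RtoC x))
  else mv (Tmat p lam n) (ccos (rhoi p lam n false * RtoC x), ccos (rhoi p lam n true * RtoC x)).

Definition bounded_seq (a : nat -> vec2) : Prop :=
  exists M : R, forall n : nat, (1 <= n)%nat ->
    Cmod (fst (a n)) <= M /\ Cmod (snd (a n)) <= M.

(* ((E + H~(x)) a) = f, i.e. for every n >= 1 the series sum_{k>=1} H~_{nk}(x) a_k
   converges (componentwise) and a_n + sum_{k>=1} H~_{nk}(x) a_k = f_n. *)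
Definition EpH_eq (p : nat) (lam alpha : nat -> C) (x : R) (a f : nat -> vec2) : Prop :=
  forall n : nat, (1 <= n)%nat ->
    @is_series _ C_R_NormedModule
      (fun j => fst (mv (Hmat p lam alpha x n (S j)) (a (S j)))) (fst (f n) - fst (a n))%C /\
    @is_series _ C_R_NormedModule
      (fun j => snd (mv (Hmat p lam alpha x n (S j)) (a (S j)))) (snd (f n) - snd (a n))%C.

(* E + H~(x) is a (well-defined) operator on m, it is invertible on m, and the
   inverse has operator norm <= K (sup norms: ||a|| <= K ||(E+H~)a||). *)
Definition EpH_invertible_bounded (p : nat) (lam alpha : nat -> C) (x K : R) : Prop :=
  (forall a, bounded_seq a -> exists f, bounded_seq f /\ EpH_eq p lam alpha x a f) /\
  (forall f, bounded_seq f -> exists a, bounded_seq a /\ EpH_eq p lam alpha x a f) /\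
  (forall a f, bounded_seq a -> EpH_eq p lam alpha x a f ->
     forall M : R, (forall n : nat, (1 <= n)%nat ->
                      Cmod (fst (f n)) <= M /\ Cmod (snd (f n)) <= M) ->
     forall n : nat, (1 <= n)%nat ->
       Cmod (fst (a n)) <= K * M /\ Cmod (snd (a n)) <= K * M).

Definition in_BOmegaK (p : nat) (Omega K : R) (lam alpha : nat -> C) : Prop :=
  in_BOmega p Omega lam alpha /\
  forall x : R, 0 <= x <= PI -> EpH_invertible_bounded p lam alpha x K.

(* g_n = (Q~(x) T^{-1} psi)_n = sum_{k>=1} Q~_{nk}(x) T_k^{-1} psi_k, given as limits *)
Definition g_eq (p : nat) (lam alpha : nat -> C) (x : R) (psi g : nat -> vec2) : Prop :=
  forall n : nat, (1 <= n)%nat ->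
    @is_series _ C_R_NormedModule
      (fun j => fst (mv (Qmat p lam alpha x n (S j)) (mv (Tinv p lam (S j)) (psi (S j))))) (fst (g n)) /\
    @is_series _ C_R_NormedModule
      (fun j => snd (mv (Qmat p lam alpha x n (S j)) (mv (Tinv p lam (S j)) (psi (S j))))) (snd (g n)).

From Stdlib Require Import Reals Lra Lia Psatz.
From Coquelicot Require Import Coquelicot.
Open Scope R_scope.

(* Since (E + H) psi = psit and H_nk = T_n Q_nk T_k^{-1}, the series defining g converge to
   g_n = T_n^{-1} (psit_n - psi_n). Bound (1) comes from the bound K on (E + H)^{-1} and a uniform
   bound on psit, whose first component is a difference quotient of cos controlled by a Taylor
   estimate. The partial sums of the series for g_ni are integrals over [0, x] of cos (rho_ni t)
   against F_M (t) = sum_{k <= M} (alpha_k u_k cos (rho_k t) - alphat_k psi_k1 cos (rhot_k t)).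
   Expanding cos (rho_k t) around the model frequency rhot_k writes F_M as
   sum A_k cos (rhot_k t) - sum E_k t sin (rhot_k t) + sum B_k R_k (t), with |A_k|, |E_k| = O(xi_k)
   and |R_k| = O(xi_k^2); the Bessel inequalities for the almost orthogonal systems cos (rhot_k t)
   and t sin (rhot_k t) on [0, pi], used dually, bound F_M in L_2 (0, x) uniformly in M.
   Bessel once more bounds sum |g_n1|^2, and g_n0 - g_n1 = int R_n F - rhohat_n int t sin (rhot_n t) F
   is O(xi_n^2) + xi_n |e_n| with e square summable, which gives (4); then
   |g_n0|^2 <= 2 |g_n1|^2 + 2 |g_n0 - g_n1|^2 gives (3), and (2) follows termwise. *)

Lemma Rabs_le_of_between (a c : R) : Rmin 0 a <= c <= Rmax 0 a -> Rabs c <= Rabs a.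
Proof.
  unfold Rmin, Rmax; destruct (Rle_dec 0 a); intros [H1 H2];
  unfold Rabs; repeat destruct Rcase_abs; lra.
Qed.

Lemma MVT_abs_le (f df : R -> R) (a b M : R) :
  (forall s, Rmin a b <= s <= Rmax a b -> is_derive f s (df s)) ->
  (forall s, Rmin a b <= s <= Rmax a b -> Rabs (df s) <= M) ->
  Rabs (f b - f a) <= M * Rabs (b - a).
Proof.
  intros Hd Hb.
  destruct (MVT_gen f a b df) as [c [Hc ->]].
  - intros s Hs; apply Hd; lra.
  - intros s Hs. apply continuity_pt_filterlim, (ex_derive_continuous f s).
    eexists; apply Hd; exact Hs.
  - rewrite Rabs_mult. apply Rmult_le_compat_r; [apply Rabs_pos | apply Hb, Hc].
Qed.

Lemma MVT_abs_le_0 (f df : R -> R) (y M : R) :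
  (forall s, is_derive f s (df s)) ->
  (forall s, Rabs s <= Rabs y -> Rabs (df s) <= M) ->
  Rabs (f y - f 0) <= M * Rabs y.
Proof.
  intros Hd Hb. rewrite <- (Rminus_0_r y) at 2.
  apply (MVT_abs_le f df); [intros; apply Hd|].
  intros s Hs. apply Hb, Rabs_le_of_between, Hs.
Qed.

Lemma exp_le_exp_of_le (a b : R) : a <= b -> exp a <= exp b.
Proof. intros [H|<-]; [left; apply exp_increasing, H | lra]. Qed.

Lemma one_le_exp (a : R) : 0 <= a -> 1 <= exp a.
Proof. rewrite <- exp_0. apply exp_le_exp_of_le. Qed.

Lemma Rabs_mul_le_half_sq (a b : R) : Rabs a * Rabs b <= (a ^ 2 + b ^ 2) / 2.
Proof.
  rewrite <- (pow2_abs a), <- (pow2_abs b).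
  pose proof (pow2_ge_0 (Rabs a - Rabs b)). nra.
Qed.

Lemma pow2_eq_Rabs_mul (v : R) : v ^ 2 = Rabs v * Rabs v.
Proof. rewrite <- pow2_abs. ring. Qed.

Lemma sin_lipschitz (a b : R) : Rabs (sin a - sin b) <= Rabs (a - b).
Proof.
  rewrite <- (Rmult_1_l (Rabs (a - b))).
  apply (MVT_abs_le sin cos b a 1).
  - intros s _; apply is_derive_sin.
  - intros s _; apply Rabs_le; pose proof (COS_bound s); lra.
Qed.

Lemma cos_taylor1_le (u v : R) : Rabs (cos (u + v) - cos u + v * sin u) <= v ^ 2.
Proof.
  replace (cos (u + v) - cos u + v * sin u) with
    ((cos (u + v) + v * sin u) - (cos (u + 0) + 0 * sin u)) by (rewrite Rplus_0_r; ring).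
  rewrite pow2_eq_Rabs_mul.
  apply (MVT_abs_le_0 (fun s => cos (u + s) + s * sin u) (fun s => - sin (u + s) + sin u)).
  - intros s. auto_derive; auto. ring.
  - intros s Hs. replace (- sin (u + s) + sin u) with (sin u - sin (u + s)) by ring.
    eapply Rle_trans; [apply sin_lipschitz|].
    replace (u - (u + s)) with (- s) by ring. rewrite Rabs_Ropp; exact Hs.
Qed.

Lemma is_derive_sinh (s : R) : is_derive sinh s (cosh s).
Proof. apply is_derive_Reals, derivable_pt_lim_sinh. Qed.

Lemma is_derive_cosh (s : R) : is_derive cosh s (sinh s).
Proof. apply is_derive_Reals, derivable_pt_lim_cosh. Qed.

Lemma Rabs_cosh_le (s : R) : Rabs (cosh s) <= exp (Rabs s).
Proof.
  unfold cosh. pose proof (exp_pos s); pose proof (exp_pos (-s)).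
  pose proof (exp_le_exp_of_le _ _ (Rle_abs s)).
  pose proof (exp_le_exp_of_le (- s) _ (Rabs_maj2 s)).
  rewrite Rabs_right; lra.
Qed.

Lemma Rabs_sinh_le (s : R) : Rabs (sinh s) <= exp (Rabs s).
Proof.
  unfold sinh. pose proof (exp_pos s); pose proof (exp_pos (-s)).
  pose proof (exp_le_exp_of_le _ _ (Rle_abs s)).
  pose proof (exp_le_exp_of_le (- s) _ (Rabs_maj2 s)).
  apply Rabs_le; lra.
Qed.

Lemma Rabs_sinh_le_lin (y : R) : Rabs (sinh y) <= exp (Rabs y) * Rabs y.
Proof.
  rewrite <- (Rminus_0_r (sinh y)), <- sinh_0.
  apply (MVT_abs_le_0 sinh cosh); [apply is_derive_sinh|].
  intros s Hs. eapply Rle_trans; [apply Rabs_cosh_le|]. apply exp_le_exp_of_le, Hs.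
Qed.

Lemma Rabs_cosh_sub1_le_lin (y : R) : Rabs (cosh y - 1) <= exp (Rabs y) * Rabs y.
Proof.
  rewrite <- cosh_0.
  apply (MVT_abs_le_0 cosh sinh); [apply is_derive_cosh|].
  intros s Hs. eapply Rle_trans; [apply Rabs_sinh_le|]. apply exp_le_exp_of_le, Hs.
Qed.

Lemma Rabs_cosh_sub1_le (y : R) : Rabs (cosh y - 1) <= exp (Rabs y) * y ^ 2.
Proof.
  rewrite <- cosh_0, pow2_eq_Rabs_mul, <- Rmult_assoc.
  apply (MVT_abs_le_0 cosh sinh); [apply is_derive_cosh|].
  intros s Hs. eapply Rle_trans; [apply Rabs_sinh_le_lin|].
  apply Rmult_le_compat; auto using Rabs_pos, Rlt_le, exp_pos, exp_le_exp_of_le.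
Qed.

Lemma Rabs_sinh_sub_id_le (y : R) : Rabs (sinh y - y) <= exp (Rabs y) * y ^ 2.
Proof.
  replace (sinh y - y) with ((sinh y - y) - (sinh 0 - 0)) by (rewrite sinh_0; ring).
  rewrite pow2_eq_Rabs_mul, <- Rmult_assoc.
  apply (MVT_abs_le_0 (fun s => sinh s - s) (fun s => cosh s - 1)).
  - intros s. apply (is_derive_minus sinh (fun s => s)); [apply is_derive_sinh|].
    apply (is_derive_id s).
  - intros s Hs. eapply Rle_trans; [apply Rabs_cosh_sub1_le_lin|].
    apply Rmult_le_compat; auto using Rabs_pos, Rlt_le, exp_pos, exp_le_exp_of_le.
Qed.
Lemma Rabs_mul_le (a b A B : R) : Rabs a <= A -> Rabs b <= B -> Rabs (a * b) <= A * B.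
Proof. intros. rewrite Rabs_mult. apply Rmult_le_compat; auto using Rabs_pos. Qed.

Lemma Rabs_mul_t_le (d t Om : R) : Rabs d <= Om -> 0 <= t <= PI -> Rabs (d * t) <= PI * Om.
Proof. intros Hd Ht. rewrite Rabs_mult, (Rabs_right t) by lra. pose proof (Rabs_pos d). nra. Qed.

Lemma sqr_mul_t_le (d t : R) : 0 <= t <= PI -> (d * t) ^ 2 <= PI ^ 2 * d ^ 2.
Proof.
  intros Ht. replace ((d * t) ^ 2) with (d ^ 2 * t ^ 2) by ring.
  pose proof (pow2_ge_0 d). assert (t ^ 2 <= PI ^ 2) by (apply pow_incr; lra). nra.
Qed.

Lemma ccos_taylor1_re_le (r d1 d2 t Om : R) : Rabs d1 <= Om -> Rabs d2 <= Om -> 0 <= t <= PI ->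
  Rabs (cos ((r + d1) * t) * cosh (d2 * t) - cos (r * t) + d1 * t * sin (r * t))
  <= 2 * PI ^ 2 * exp (PI * Om) * (d1 ^ 2 + d2 ^ 2).
Proof.
  intros H1 H2 Ht. set (E := exp (PI * Om)).
  assert (HE : 1 <= E) by (apply one_le_exp; pose proof (Rabs_pos d1); pose proof PI_RGT_0; nra).
  replace (cos ((r + d1) * t) * cosh (d2 * t) - cos (r * t) + d1 * t * sin (r * t)) with
    (cos ((r + d1) * t) * (cosh (d2 * t) - 1) + (cos (r * t + d1 * t) - cos (r * t) + (d1 * t) * sin (r * t)))
    by (replace ((r + d1) * t) with (r * t + d1 * t) by ring; ring).
  eapply Rle_trans; [apply Rabs_triang|].
  assert (A1 : Rabs (cos ((r + d1) * t) * (cosh (d2 * t) - 1)) <= 1 * (E * (PI ^ 2 * d2 ^ 2))).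
  { apply Rabs_mul_le; [apply Rabs_le; pose proof (COS_bound ((r + d1) * t)); lra|].
    eapply Rle_trans; [apply Rabs_cosh_sub1_le|].
    apply Rmult_le_compat; auto using Rlt_le, exp_pos, pow2_ge_0, sqr_mul_t_le.
    apply exp_le_exp_of_le, Rabs_mul_t_le; auto. }
  assert (A2 : Rabs (cos (r * t + d1 * t) - cos (r * t) + (d1 * t) * sin (r * t)) <= PI ^ 2 * d1 ^ 2)
    by (eapply Rle_trans; [apply cos_taylor1_le | apply sqr_mul_t_le; auto]).
  assert (0 <= PI ^ 2 * d1 ^ 2) by (apply Rmult_le_pos; apply pow2_ge_0).
  assert (0 <= PI ^ 2 * d2 ^ 2) by (apply Rmult_le_pos; apply pow2_ge_0).
  nra.
Qed.

Lemma ccos_taylor1_im_le (r d1 d2 t Om : R) : Rabs d1 <= Om -> Rabs d2 <= Om -> 0 <= t <= PI ->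
  Rabs (- (sin ((r + d1) * t) * sinh (d2 * t)) + d2 * t * sin (r * t))
  <= 2 * PI ^ 2 * exp (PI * Om) * (d1 ^ 2 + d2 ^ 2).
Proof.
  intros H1 H2 Ht. set (E := exp (PI * Om)).
  assert (HE : 1 <= E) by (apply one_le_exp; pose proof (Rabs_pos d1); pose proof PI_RGT_0; nra).
  replace (- (sin ((r + d1) * t) * sinh (d2 * t)) + d2 * t * sin (r * t)) with
    (- (sin ((r + d1) * t) * (sinh (d2 * t) - d2 * t)) - (d2 * t) * (sin ((r + d1) * t) - sin (r * t)))
    by ring.
  eapply Rle_trans; [apply Rabs_triang|]. rewrite !Rabs_Ropp.
  assert (A1 : Rabs (sin ((r + d1) * t) * (sinh (d2 * t) - d2 * t)) <= 1 * (E * (PI ^ 2 * d2 ^ 2))).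
  { apply Rabs_mul_le; [apply Rabs_le; pose proof (SIN_bound ((r + d1) * t)); lra|].
    eapply Rle_trans; [apply Rabs_sinh_sub_id_le|].
    apply Rmult_le_compat; auto using Rlt_le, exp_pos, pow2_ge_0, sqr_mul_t_le.
    apply exp_le_exp_of_le, Rabs_mul_t_le; auto. }
  assert (A2 : Rabs ((d2 * t) * (sin ((r + d1) * t) - sin (r * t)))
               <= ((d2 * t) ^ 2 + (d1 * t) ^ 2) / 2).
  { rewrite Rabs_mult. eapply Rle_trans; [|apply Rabs_mul_le_half_sq].
    apply Rmult_le_compat_l; [apply Rabs_pos|].
    eapply Rle_trans; [apply sin_lipschitz|]. right; f_equal; ring. }
  pose proof (sqr_mul_t_le d1 t Ht); pose proof (sqr_mul_t_le d2 t Ht).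
  assert (0 <= PI ^ 2 * d1 ^ 2) by (apply Rmult_le_pos; apply pow2_ge_0).
  assert (0 <= PI ^ 2 * d2 ^ 2) by (apply Rmult_le_pos; apply pow2_ge_0).
  nra.
Qed.

Fixpoint rsum (f : nat -> R) (n : nat) : R :=
  match n with O => 0 | S n => rsum f n + f n end.

Lemma rsum_ext f g n : (forall j, (j < n)%nat -> f j = g j) -> rsum f n = rsum g n.
Proof.
  induction n as [|n IH]; simpl; intros H; auto.
  rewrite IH by (intros; apply H; lia). rewrite H by lia. reflexivity.
Qed.

Lemma rsum_plus f g n : rsum (fun j => f j + g j) n = rsum f n + rsum g n.
Proof. induction n; simpl; [ring | rewrite IHn; ring]. Qed.

Lemma rsum_minus f g n : rsum (fun j => f j - g j) n = rsum f n - rsum g n.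
Proof. induction n; simpl; [ring | rewrite IHn; ring]. Qed.

Lemma rsum_scal c f n : rsum (fun j => c * f j) n = c * rsum f n.
Proof. induction n; simpl; [ring | rewrite IHn; ring]. Qed.

Lemma rsum_mult_r f n c : rsum f n * c = rsum (fun j => f j * c) n.
Proof. induction n; simpl; [ring | rewrite <- IHn; ring]. Qed.

Lemma rsum_const c n : rsum (fun _ => c) n = INR n * c.
Proof. induction n; simpl rsum; [simpl; ring | rewrite IHn, S_INR; ring]. Qed.

Lemma rsum_le f g n : (forall j, (j < n)%nat -> f j <= g j) -> rsum f n <= rsum g n.
Proof.
  induction n as [|n IH]; simpl; intros H; [lra|].
  assert (f n <= g n) by (apply H; lia).
  assert (rsum f n <= rsum g n) by (apply IH; intros; apply H; lia).
  lra.
Qed.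

Lemma rsum_ge0 f n : (forall j, (j < n)%nat -> 0 <= f j) -> 0 <= rsum f n.
Proof.
  intros H. replace 0 with (rsum (fun _ => 0) n) by (rewrite rsum_const; ring).
  apply rsum_le; auto.
Qed.

Lemma rsum_split f a b : rsum f (a + b) = rsum f a + rsum (fun j => f (a + j)%nat) b.
Proof.
  induction b; simpl; [rewrite Nat.add_0_r; ring|].
  rewrite Nat.add_succ_r; simpl. rewrite IHb; ring.
Qed.

Lemma rsum_S_shift f n : rsum f (S n) = f O + rsum (fun j => f (S j)) n.
Proof. replace (S n) with (1 + n)%nat by lia. rewrite rsum_split. simpl. ring. Qed.

Lemma rsum_incr f a b : (a <= b)%nat -> (forall j, 0 <= f j) -> rsum f a <= rsum f b.
Proof.
  intros Hab H. replace b with (a + (b - a))%nat by lia. rewrite rsum_split.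
  assert (0 <= rsum (fun j => f (a + j)%nat) (b - a)) by (apply rsum_ge0; auto).
  lra.
Qed.

Lemma rsum_term_le f n j : (j < n)%nat -> (forall j, 0 <= f j) -> f j <= rsum f n.
Proof.
  intros Hj H. eapply Rle_trans; [|apply (rsum_incr f (S j) n); auto; lia].
  simpl. assert (0 <= rsum f j) by (apply rsum_ge0; auto). lra.
Qed.

Lemma Rabs_rsum_le f n : Rabs (rsum f n) <= rsum (fun j => Rabs (f j)) n.
Proof.
  induction n; simpl; [rewrite Rabs_R0; lra|].
  eapply Rle_trans; [apply Rabs_triang|]. lra.
Qed.

Lemma sum_n_rsum (a : nat -> R) N : sum_n a N = rsum a (S N).
Proof.
  induction N; [rewrite sum_O; simpl; ring|].
  rewrite sum_Sn, IHN. simpl. unfold plus; simpl. ring.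
Qed.

Lemma is_lim_seq_le_const (v : nat -> R) (l c : R) :
  (forall N, v N <= c) -> is_lim_seq v l -> l <= c.
Proof. intros H Hl. exact (is_lim_seq_le v (fun _ => c) l c H Hl (is_lim_seq_const c)). Qed.

Lemma is_lim_seq_sqr (u : nat -> R) (l : R) :
  is_lim_seq u l -> is_lim_seq (fun N => u N ^ 2) (l ^ 2).
Proof.
  intros H. apply (is_lim_seq_ext (fun N => u N * u N)); [intros; ring|].
  replace (l ^ 2) with (l * l) by ring. apply is_lim_seq_mult'; auto.
Qed.

Lemma is_lim_seq_rsum (u : nat -> nat -> R) (l : nat -> R) L :
  (forall j, (j < L)%nat -> is_lim_seq (fun N => u N j) (l j)) ->
  is_lim_seq (fun N => rsum (u N) L) (rsum l L).
Proof.
  induction L; intros H; simpl; [apply is_lim_seq_const|].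
  apply is_lim_seq_plus'; [apply IHL; intros; apply H; lia | apply H; lia].
Qed.

Lemma series_le_of_rsum_le (a : nat -> R) c :
  (forall j, 0 <= a j) -> (forall L, rsum a L <= c) -> ex_series a /\ Series a <= c.
Proof.
  intros Ha Hc.
  assert (Hinc : forall N, sum_n a N <= sum_n a (S N)).
  { intros N. rewrite sum_Sn. unfold plus; simpl. pose proof (Ha (S N)). lra. }
  assert (Hb : forall N, sum_n a N <= c) by (intros; rewrite sum_n_rsum; auto).
  destruct (ex_finite_lim_seq_incr _ _ Hinc Hb) as [l Hl].
  split; [exists l; exact Hl|].
  rewrite (is_series_unique a l Hl). apply (is_lim_seq_le_const (sum_n a)); auto.
Qed.

Lemma rsum_le_Series (a : nat -> R) :
  (forall j, 0 <= a j) -> ex_series a -> forall M, rsum a M <= Series a.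
Proof.
  intros Ha Hex M.
  assert (Hinc : forall N, sum_n a N <= sum_n a (S N)).
  { intros N. rewrite sum_Sn. unfold plus; simpl. pose proof (Ha (S N)). lra. }
  pose proof (is_lim_seq_incr_compare _ _ (Series_correct a Hex) Hinc) as Hle.
  destruct M as [|M]; [simpl; pose proof (Hle 0%nat); rewrite sum_O in H; pose proof (Ha 0%nat); lra|].
  rewrite <- sum_n_rsum. apply Hle.
Qed.

Definition Rcont (f : R -> R) : Prop := forall t, continuous f t.

Lemma Rcont_ext f g : (forall t, f t = g t) -> Rcont f -> Rcont g.
Proof. intros H Hf t. apply (continuous_ext f); auto. Qed.

Lemma Rcont_const c : Rcont (fun _ => c).
Proof. intros t; apply continuous_const. Qed.

Lemma Rcont_id : Rcont (fun t => t).
Proof. intros t; apply continuous_id. Qed.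

Lemma Rcont_plus f g : Rcont f -> Rcont g -> Rcont (fun t => f t + g t).
Proof. intros Hf Hg t; apply (continuous_plus f g); auto. Qed.

Lemma Rcont_mult f g : Rcont f -> Rcont g -> Rcont (fun t => f t * g t).
Proof. intros Hf Hg t; apply (continuous_mult f g); auto. Qed.

Lemma Rcont_opp f : Rcont f -> Rcont (fun t => - f t).
Proof.
  intros Hf. apply (Rcont_ext (fun t => (-1) * f t)); [intros; ring|].
  apply Rcont_mult; auto using Rcont_const.
Qed.

Lemma Rcont_minus f g : Rcont f -> Rcont g -> Rcont (fun t => f t - g t).
Proof. intros. apply Rcont_plus; auto using Rcont_opp. Qed.

Lemma Rcont_sqr f : Rcont f -> Rcont (fun t => f t ^ 2).
Proof. intros. apply (Rcont_ext (fun t => f t * f t)); [intros; ring|]. apply Rcont_mult; auto. Qed.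

Lemma Rcont_rsum (f : nat -> R -> R) n :
  (forall j, Rcont (f j)) -> Rcont (fun t => rsum (fun j => f j t) n).
Proof. intros H; induction n; simpl; [apply Rcont_const | apply Rcont_plus; auto]. Qed.

Lemma Rcont_of_ex_derive f : (forall t, ex_derive f t) -> Rcont f.
Proof. intros H t. apply (@ex_derive_continuous R_AbsRing R_NormedModule), H. Qed.

Lemma Rcont_cos a : Rcont (fun t => cos (a * t)).
Proof. apply Rcont_of_ex_derive; intros; auto_derive; auto. Qed.

Lemma Rcont_sin a : Rcont (fun t => sin (a * t)).
Proof. apply Rcont_of_ex_derive; intros; auto_derive; auto. Qed.

Lemma Rcont_cosh a : Rcont (fun t => cosh (a * t)).
Proof. apply Rcont_of_ex_derive; intros; unfold cosh; auto_derive; auto. Qed.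

Lemma Rcont_sinh a : Rcont (fun t => sinh (a * t)).
Proof. apply Rcont_of_ex_derive; intros; unfold sinh; auto_derive; auto. Qed.

#[local] Hint Resolve Rcont_plus Rcont_mult Rcont_const Rcont_id Rcont_opp Rcont_minus
  Rcont_rsum Rcont_cos Rcont_sin Rcont_cosh Rcont_sinh Rcont_sqr : Rcont.

Definition rint (f : R -> R) (a b : R) : R := RInt f a b.

Lemma ex_rint f a b : Rcont f -> ex_RInt f a b.
Proof. intros H. apply (@ex_RInt_continuous R_CompleteNormedModule). intros; apply H. Qed.

Lemma rint_ext (f g : R -> R) a b :
  (forall t, Rmin a b <= t <= Rmax a b -> f t = g t) -> rint f a b = rint g a b.
Proof. unfold rint. intros H; apply RInt_ext; intros; apply H; lra. Qed.

Lemma rint_plus f g a b :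
  Rcont f -> Rcont g -> rint (fun t => f t + g t) a b = rint f a b + rint g a b.
Proof. unfold rint. intros. apply (RInt_plus f g); apply ex_rint; auto. Qed.

Lemma rint_scal c f a b : Rcont f -> rint (fun t => c * f t) a b = c * rint f a b.
Proof. unfold rint. intros. apply (RInt_scal f a b c); apply ex_rint; auto. Qed.

Lemma rint_opp f a b : Rcont f -> rint (fun t => - f t) a b = - rint f a b.
Proof.
  intros. transitivity (rint (fun t => (-1) * f t) a b); [apply rint_ext; intros; ring|].
  rewrite rint_scal by auto. ring.
Qed.

Lemma rint_minus f g a b :
  Rcont f -> Rcont g -> rint (fun t => f t - g t) a b = rint f a b - rint g a b.
Proof. intros. unfold Rminus. rewrite <- rint_opp; auto. apply rint_plus; auto with Rcont. Qed.

Lemma rint_const c a b : rint (fun _ => c) a b = c * (b - a).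
Proof. unfold rint. rewrite RInt_const. simpl. unfold scal; simpl. unfold mult; simpl. ring. Qed.

Lemma rint_rsum (f : nat -> R -> R) a b n : (forall j, Rcont (f j)) ->
  rint (fun t => rsum (fun j => f j t) n) a b = rsum (fun j => rint (f j) a b) n.
Proof.
  intros H; induction n; simpl; [rewrite rint_const; ring|].
  rewrite rint_plus, IHn; auto with Rcont.
Qed.

Lemma rint_le f g a b : a <= b -> Rcont f -> Rcont g ->
  (forall t, a <= t <= b -> f t <= g t) -> rint f a b <= rint g a b.
Proof. unfold rint. intros. apply RInt_le; auto using ex_rint. intros; apply H2; lra. Qed.

Lemma rint_ge0 f a b : a <= b -> Rcont f -> (forall t, a <= t <= b -> 0 <= f t) -> 0 <= rint f a b.
Proof. unfold rint. intros. apply RInt_ge_0; auto using ex_rint. intros; apply H1; lra. Qed.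

Lemma rint_le_const f a b M : a <= b -> Rcont f ->
  (forall t, a <= t <= b -> f t <= M) -> rint f a b <= M * (b - a).
Proof. intros. rewrite <- rint_const. apply rint_le; auto with Rcont. Qed.

Lemma Rabs_rint_le f g x : 0 <= x -> Rcont f -> Rcont g ->
  (forall t, 0 <= t <= x -> Rabs (f t) <= g t) -> Rabs (rint f 0 x) <= rint g 0 x.
Proof.
  intros Hx Hf Hg H. apply Rabs_le. rewrite <- rint_opp by auto.
  split; apply rint_le; auto with Rcont; intros t Ht; pose proof (H t Ht);
    pose proof (Rle_abs (f t)); pose proof (Rabs_maj2 (f t)); lra.
Qed.

Lemma rint_0_incr f x y : 0 <= x <= y -> Rcont f -> (forall t, 0 <= t <= y -> 0 <= f t) ->
  rint f 0 x <= rint f 0 y.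
Proof.
  intros Hx Hf Hp. unfold rint. rewrite <- (RInt_Chasles f 0 x y) by (apply ex_rint; auto).
  assert (0 <= rint f x y) by (apply rint_ge0; [lra | auto | intros; apply Hp; lra]).
  unfold rint in H. simpl. unfold plus; simpl. lra.
Qed.

Lemma rint_derive (F f : R -> R) a b :
  (forall t, is_derive F t (f t)) -> Rcont f -> rint f a b = F b - F a.
Proof.
  intros Hd Hc. unfold rint. apply is_RInt_unique.
  apply (is_RInt_derive F f a b); intros; auto.
Qed.

Lemma sin_INR_mul_PI m : sin (INR m * PI) = 0.
Proof. apply sin_eq_0_1. exists (Z.of_nat m). rewrite INR_IZR_INZ; auto. Qed.

Lemma INR_sqr_sub_neq0 m m' : m <> m' -> INR m ^ 2 - INR m' ^ 2 <> 0.
Proof.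
  intros H. pose proof (pos_INR m); pose proof (pos_INR m').
  assert (INR m <> INR m') by (intro E; apply INR_eq in E; auto).
  replace (INR m ^ 2 - INR m' ^ 2) with ((INR m - INR m') * (INR m + INR m')) by ring.
  apply Rmult_integral_contrapositive; split; [lra|].
  destruct (Req_dec (INR m + INR m') 0); [|auto]. exfalso; apply H2; lra.
Qed.

Lemma rint_cos_cos_orth m m' : m <> m' ->
  rint (fun t => cos (INR m * t) * cos (INR m' * t)) 0 PI = 0.
Proof.
  intros H. pose proof (INR_sqr_sub_neq0 m m' H) as Hn.
  set (a := INR m) in *; set (b := INR m') in *.
  rewrite (rint_derive (fun t =>
    (a * sin (a * t) * cos (b * t) - b * cos (a * t) * sin (b * t)) / (a ^ 2 - b ^ 2))).
  - unfold a, b. rewrite !Rmult_0_r, sin_0, (Rmult_comm (INR m) PI), (Rmult_comm (INR m') PI).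
    rewrite <- (Rmult_comm (INR m)), <- (Rmult_comm (INR m')), !sin_INR_mul_PI. field. exact Hn.
  - intros t. auto_derive; [auto|]. field. replace (a * a - b * b) with (a ^ 2 - b ^ 2) by ring. exact Hn.
  - auto with Rcont.
Qed.

Lemma rint_sin_sin_orth m m' : m <> m' ->
  rint (fun t => sin (INR m * t) * sin (INR m' * t)) 0 PI = 0.
Proof.
  intros H. pose proof (INR_sqr_sub_neq0 m m' H) as Hn.
  set (a := INR m) in *; set (b := INR m') in *.
  rewrite (rint_derive (fun t =>
    (b * sin (a * t) * cos (b * t) - a * cos (a * t) * sin (b * t)) / (a ^ 2 - b ^ 2))).
  - unfold a, b. rewrite !Rmult_0_r, sin_0, (Rmult_comm (INR m) PI), (Rmult_comm (INR m') PI).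
    rewrite <- (Rmult_comm (INR m)), <- (Rmult_comm (INR m')), !sin_INR_mul_PI. field. exact Hn.
  - intros t. auto_derive; [auto|]. field. replace (a * a - b * b) with (a ^ 2 - b ^ 2) by ring. exact Hn.
  - auto with Rcont.
Qed.

Lemma riesz_upper_of_orthogonal (phi : nat -> R -> R) b : 0 <= b ->
  (forall j, Rcont (phi j)) ->
  (forall i j, i <> j -> rint (fun t => phi i t * phi j t) 0 b = 0) ->
  (forall j t, phi j t ^ 2 <= 1) ->
  forall d L, rint (fun t => (rsum (fun j => d j * phi j t) L) ^ 2) 0 b <= b * rsum (fun j => d j ^ 2) L.
Proof.
  intros Hb Hc Ho Hd d L.
  induction L as [|L IH].
  - simpl. rewrite (rint_ext _ (fun _ => 0)) by (intros; ring). rewrite rint_const. lra.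
  - cbn [rsum].
    set (V := fun t => rsum (fun j => d j * phi j t) L) in *.
    assert (HV : Rcont V) by (unfold V; auto with Rcont).
    rewrite (rint_ext _ (fun t => V t ^ 2 + (2 * d L * (V t * phi L t) + d L ^ 2 * phi L t ^ 2)))
      by (intros; unfold V; ring).
    rewrite rint_plus, rint_plus, rint_scal, rint_scal by auto with Rcont.
    assert (Horth : rint (fun t => V t * phi L t) 0 b = 0).
    { rewrite (rint_ext _ (fun t => rsum (fun j => d j * (phi j t * phi L t)) L)).
      2:{ intros; unfold V; rewrite rsum_mult_r; apply rsum_ext; intros; ring. }
      rewrite rint_rsum by (intros; auto with Rcont).
      rewrite (rsum_ext _ (fun _ => 0)); [rewrite rsum_const; ring|].
      intros j Hj. rewrite rint_scal, Ho by (auto with Rcont; lia). ring. }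
    rewrite Horth.
    assert (rint (fun t => phi L t ^ 2) 0 b <= 1 * (b - 0)) by (apply rint_le_const; auto with Rcont).
    assert (d L ^ 2 * rint (fun t => phi L t ^ 2) 0 b <= d L ^ 2 * b)
      by (apply Rmult_le_compat_l; [apply pow2_ge_0 | lra]).
    change (rint (fun t => V t ^ 2) 0 b <= b * rsum (fun j => d j ^ 2) L) in IH.
    lra.
Qed.

(* The upper Riesz bound and Bessel's inequality are dual: [rsum d_j phi_j] and the
   coefficients [rint phi_j h] are adjoint maps between l_2 and L_2(0, x). *)
Lemma bessel_of_riesz_upper (phi : nat -> R -> R) L C x : 0 < C -> 0 <= x ->
  (forall j, Rcont (phi j)) ->
  (forall d, rint (fun t => (rsum (fun j => d j * phi j t) L) ^ 2) 0 x <= C * rsum (fun j => d j ^ 2) L) ->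
  forall h, Rcont h ->
  rsum (fun j => (rint (fun t => phi j t * h t) 0 x) ^ 2) L <= C * rint (fun t => h t ^ 2) 0 x.
Proof.
  intros HC Hx Hc Hg h Hh.
  set (e := fun j => rint (fun t => phi j t * h t) 0 x).
  set (P := fun t => rsum (fun j => e j * phi j t) L).
  assert (HP : Rcont P) by (unfold P; auto with Rcont).
  assert (HS : rsum (fun j => e j ^ 2) L = rint (fun t => P t * h t) 0 x).
  { rewrite (rint_ext _ (fun t => rsum (fun j => e j * (phi j t * h t)) L)).
    2:{ intros; unfold P; rewrite rsum_mult_r; apply rsum_ext; intros; ring. }
    rewrite rint_rsum by (intros; auto with Rcont). apply rsum_ext; intros.
    rewrite rint_scal by auto with Rcont. unfold e. ring. }
  assert (H0 : 0 <= rint (fun t => (P t - C * h t) ^ 2) 0 x)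
    by (apply rint_ge0; auto with Rcont; intros; apply pow2_ge_0).
  rewrite (rint_ext _ (fun t => P t ^ 2 + ((-2 * C) * (P t * h t) + C ^ 2 * h t ^ 2))) in H0
    by (intros; ring).
  rewrite rint_plus, rint_plus, rint_scal, rint_scal, <- HS in H0 by auto with Rcont.
  pose proof (Hg e) as HG.
  change (rint (fun t => P t ^ 2) 0 x <= C * rsum (fun j => e j ^ 2) L) in HG.
  change (rsum (fun j => e j ^ 2) L <= C * rint (fun t => h t ^ 2) 0 x).
  assert (0 <= rsum (fun j => e j ^ 2) L) by (apply rsum_ge0; intros; apply pow2_ge_0).
  set (Se := rsum (fun j => e j ^ 2) L) in *.
  set (H2 := rint (fun t => h t ^ 2) 0 x) in *.
  set (PP := rint (fun t => P t ^ 2) 0 x) in *.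
  nra.
Qed.

Lemma riesz_upper_of_bessel (phi : nat -> R -> R) L C x : 0 < C -> 0 <= x ->
  (forall j, Rcont (phi j)) ->
  (forall h, Rcont h ->
    rsum (fun j => (rint (fun t => phi j t * h t) 0 x) ^ 2) L <= C * rint (fun t => h t ^ 2) 0 x) ->
  forall d, rint (fun t => (rsum (fun j => d j * phi j t) L) ^ 2) 0 x <= C * rsum (fun j => d j ^ 2) L.
Proof.
  intros HC Hx Hc Hb d.
  set (V := fun t => rsum (fun j => d j * phi j t) L).
  assert (HV : Rcont V) by (unfold V; auto with Rcont).
  set (e := fun j => rint (fun t => phi j t * V t) 0 x).
  assert (E : rint (fun t => V t ^ 2) 0 x = rsum (fun j => d j * e j) L).
  { rewrite (rint_ext _ (fun t => rsum (fun j => d j * (phi j t * V t)) L)).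
    2:{ intros. transitivity (V t * V t); [ring|]. unfold V at 1. rewrite rsum_mult_r.
        apply rsum_ext; intros; ring. }
    rewrite rint_rsum by (intros; auto with Rcont). apply rsum_ext; intros.
    rewrite rint_scal by auto with Rcont. reflexivity. }
  change (rint (fun t => V t ^ 2) 0 x <= C * rsum (fun j => d j ^ 2) L). rewrite E.
  (* AM-GM: [d e <= C d^2 / 2 + e^2 / (2 C)], then Bessel bounds [rsum e^2] by [C rsum d e]. *)
  assert (A : rsum (fun j => d j * e j) L <= rsum (fun j => / 2 * C * d j ^ 2 + / (2 * C) * e j ^ 2) L).
  { apply rsum_le; intros. pose proof (pow2_ge_0 (C * d j - e j)).
    replace (/ 2 * C * d j ^ 2 + / (2 * C) * e j ^ 2)
      with (d j * e j + (C * d j - e j) ^ 2 / (2 * C)) by (field; lra).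
    assert (0 <= (C * d j - e j) ^ 2 / (2 * C)) by (apply Rdiv_le_0_compat; lra). lra. }
  rewrite rsum_plus, !rsum_scal in A.
  pose proof (Hb V HV) as B. fold e in B. rewrite E in B.
  assert (/ (2 * C) * rsum (fun j => e j ^ 2) L <= / 2 * rsum (fun j => d j * e j) L).
  { apply Rle_trans with (/ (2 * C) * (C * rsum (fun j => d j * e j) L)).
    - apply Rmult_le_compat_l; [left; apply Rinv_0_lt_compat; lra | exact B].
    - right; field; lra. }
  lra.
Qed.

Lemma bessel_of_orthogonal_0_PI (phi : nat -> R -> R) x : 0 <= x <= PI ->
  (forall j, Rcont (phi j)) ->
  (forall i j, i <> j -> rint (fun t => phi i t * phi j t) 0 PI = 0) ->
  (forall j t, phi j t ^ 2 <= 1) ->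
  forall L h, Rcont h ->
  rsum (fun j => (rint (fun t => phi j t * h t) 0 x) ^ 2) L <= PI * rint (fun t => h t ^ 2) 0 x.
Proof.
  intros Hx Hc Ho H1 L. pose proof PI_RGT_0.
  apply bessel_of_riesz_upper; [lra | lra | exact Hc|].
  intros d. eapply Rle_trans; [apply rint_0_incr with (y := PI)|].
  - lra.
  - auto with Rcont.
  - intros; apply pow2_ge_0.
  - apply riesz_upper_of_orthogonal; auto; lra.
Qed.

Lemma bessel_cos_INR x : 0 <= x <= PI -> forall L h, Rcont h ->
  rsum (fun j => (rint (fun t => cos (INR j * t) * h t) 0 x) ^ 2) L <= PI * rint (fun t => h t ^ 2) 0 x.
Proof.
  intros Hx. apply (bessel_of_orthogonal_0_PI (fun j t => cos (INR j * t))); auto with Rcont.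
  - apply rint_cos_cos_orth.
  - intros j t. pose proof (COS_bound (INR j * t)). nra.
Qed.

Lemma bessel_sin_INR x : 0 <= x <= PI -> forall L h, Rcont h ->
  rsum (fun j => (rint (fun t => sin (INR j * t) * h t) 0 x) ^ 2) L <= PI * rint (fun t => h t ^ 2) 0 x.
Proof.
  intros Hx. apply (bessel_of_orthogonal_0_PI (fun j t => sin (INR j * t))); auto with Rcont.
  - apply rint_sin_sin_orth.
  - intros j t. pose proof (SIN_bound (INR j * t)). nra.
Qed.

Lemma rhot_low p j : (j < p + 1)%nat -> rhot p (S j) = 0.
Proof.
  intros H. unfold rhot. replace (S j <=? p + 1)%nat with true; auto.
  symmetry; apply Nat.leb_le; lia.
Qed.

Lemma rhot_high p j : rhot p (S (p + 1 + j)) = INR (S j).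
Proof.
  unfold rhot. replace (S (p + 1 + j) <=? p + 1)%nat with false.
  - rewrite !S_INR, !plus_INR. simpl. ring.
  - symmetry; apply Nat.leb_gt; lia.
Qed.

Lemma rhot_ge0 p n : 0 <= rhot p n.
Proof.
  unfold rhot. destruct (Nat.leb_spec n (p + 1)); [lra|].
  assert (INR (p + 1) < INR n) by (apply lt_INR; lia).
  rewrite plus_INR in H0. simpl in H0. lra.
Qed.

(* The model frequencies [rhot_n], n >= 1, are 0 (p + 1 times) followed by 1, 2, 3, ...:
   the system is orthogonal up to p + 1 repetitions of the constant function. *)
Lemma bessel_cos_rhot p x : 0 <= x <= PI -> forall L h, Rcont h ->
  rsum (fun j => (rint (fun t => cos (rhot p (S j) * t) * h t) 0 x) ^ 2) L
  <= (INR p + 2) * PI * rint (fun t => h t ^ 2) 0 x.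
Proof.
  intros Hx L h Hh.
  pose (f := fun j => (rint (fun t => cos (rhot p (S j) * t) * h t) 0 x) ^ 2).
  pose (H2 := rint (fun t => h t ^ 2) 0 x).
  pose (c := fun j => (rint (fun t => cos (INR j * t) * h t) 0 x) ^ 2).
  assert (HB : rsum c (S L) <= PI * H2) by exact (bessel_cos_INR x Hx (S L) h Hh).
  rewrite rsum_S_shift in HB.
  assert (0 <= c 0%nat) by apply pow2_ge_0.
  assert (0 <= rsum (fun j => c (S j)) L) by (apply rsum_ge0; intros; apply pow2_ge_0).
  eapply Rle_trans; [apply (rsum_incr f L (p + 1 + L)); [lia | intros; apply pow2_ge_0]|].
  rewrite rsum_split, (rsum_ext f (fun _ => c 0%nat)), rsum_const,
    (rsum_ext (fun j => f (p + 1 + j)%nat) (fun j => c (S j))).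
  - assert (INR (p + 1) * c 0%nat <= INR (p + 1) * (PI * H2))
      by (apply Rmult_le_compat_l; [apply pos_INR | lra]).
    unfold H2 in *. rewrite plus_INR in *. simpl INR in *. lra.
  - intros j Hj. unfold f, c. rewrite rhot_high. reflexivity.
  - intros j Hj. unfold f, c. rewrite rhot_low by lia. simpl INR. reflexivity.
Qed.

Lemma bessel_t_sin_rhot p x : 0 <= x <= PI -> forall L h, Rcont h ->
  rsum (fun j => (rint (fun t => (t * sin (rhot p (S j) * t)) * h t) 0 x) ^ 2) L
  <= PI ^ 3 * rint (fun t => h t ^ 2) 0 x.
Proof.
  intros Hx L h Hh.
  pose (f := fun j => (rint (fun t => (t * sin (rhot p (S j) * t)) * h t) 0 x) ^ 2).
  pose (s := fun j => (rint (fun t => sin (INR j * t) * (t * h t)) 0 x) ^ 2).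
  assert (HB : rsum s (S L) <= PI * rint (fun t => (t * h t) ^ 2) 0 x)
    by exact (bessel_sin_INR x Hx (S L) (fun t => t * h t) ltac:(auto with Rcont)).
  rewrite rsum_S_shift in HB.
  assert (0 <= s 0%nat) by apply pow2_ge_0.
  assert (Hth : rint (fun t => (t * h t) ^ 2) 0 x <= PI ^ 2 * rint (fun t => h t ^ 2) 0 x).
  { rewrite <- rint_scal by auto with Rcont.
    apply rint_le; [lra | auto with Rcont | auto with Rcont|]. intros t Ht.
    pose proof (pow2_ge_0 (h t)).
    replace ((t * h t) ^ 2) with (t ^ 2 * h t ^ 2) by ring.
    apply Rmult_le_compat_r; auto. nra. }
  eapply Rle_trans; [apply (rsum_incr f L (p + 1 + L)); [lia | intros; apply pow2_ge_0]|].
  rewrite rsum_split, (rsum_ext f (fun _ => 0)), rsum_const,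
    (rsum_ext (fun j => f (p + 1 + j)%nat) (fun j => s (S j))).
  - assert (PI * rint (fun t => (t * h t) ^ 2) 0 x <= PI ^ 3 * rint (fun t => h t ^ 2) 0 x).
    { replace (PI ^ 3) with (PI * PI ^ 2) by ring. rewrite Rmult_assoc.
      apply Rmult_le_compat_l; [pose proof PI_RGT_0; lra | exact Hth]. }
    lra.
  - intros j Hj. unfold f, s. rewrite rhot_high. f_equal. apply rint_ext; intros; ring.
  - intros j Hj. unfold f. rewrite rhot_low by lia.
    rewrite (rint_ext _ (fun _ => 0)) by (intros; rewrite Rmult_0_l, sin_0; ring).
    rewrite rint_const; ring.
Qed.

Lemma riesz_cos_rhot p x : 0 <= x <= PI -> forall L d,
  rint (fun t => (rsum (fun j => d j * cos (rhot p (S j) * t)) L) ^ 2) 0 x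
  <= (INR p + 2) * PI * rsum (fun j => d j ^ 2) L.
Proof.
  intros Hx L. apply (riesz_upper_of_bessel (fun j t => cos (rhot p (S j) * t))).
  - pose proof (pos_INR p); pose proof PI_RGT_0; nra.
  - lra.
  - intros; auto with Rcont.
  - apply bessel_cos_rhot; auto.
Qed.

Lemma riesz_t_sin_rhot p x : 0 <= x <= PI -> forall L d,
  rint (fun t => (rsum (fun j => d j * (t * sin (rhot p (S j) * t))) L) ^ 2) 0 x
  <= PI ^ 3 * rsum (fun j => d j ^ 2) L.
Proof.
  intros Hx L. apply (riesz_upper_of_bessel (fun j t => t * sin (rhot p (S j) * t))).
  - pose proof PI_RGT_0. apply pow_lt; lra.
  - lra.
  - intros; auto with Rcont.
  - apply bessel_t_sin_rhot; auto.
Qed.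

Fixpoint Csum (f : nat -> C) (n : nat) : C :=
  match n with O => RtoC 0 | S n => (Csum f n + f n)%C end.

Lemma fst_Csum f n : fst (Csum f n) = rsum (fun j => fst (f j)) n.
Proof. induction n; simpl; auto. rewrite IHn; auto. Qed.

Lemma snd_Csum f n : snd (Csum f n) = rsum (fun j => snd (f j)) n.
Proof. induction n; simpl; auto. rewrite IHn; auto. Qed.

Lemma Csum_ext f g n : (forall j, (j < n)%nat -> f j = g j) -> Csum f n = Csum g n.
Proof.
  induction n; simpl; intros H; auto.
  rewrite IHn by (intros; apply H; lia). rewrite H by lia. reflexivity.
Qed.

Lemma Csum_mult_l (c : C) f n : (c * Csum f n)%C = Csum (fun j => c * f j)%C n.
Proof.
  induction n; simpl; [apply injective_projections; simpl; ring|].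
  rewrite <- IHn; ring.
Qed.

Lemma sum_n_Csum (a : nat -> C) N : @sum_n C_R_NormedModule a N = Csum a (S N).
Proof.
  induction N.
  - rewrite sum_O. simpl. apply injective_projections; simpl; ring.
  - rewrite sum_Sn, IHN. reflexivity.
Qed.

Lemma is_series_Cext (a b : nat -> C) l : (forall j, a j = b j) ->
  @is_series _ C_R_NormedModule a l -> @is_series _ C_R_NormedModule b l.
Proof. intros H. apply is_series_ext; auto. Qed.

Lemma is_series_Cscal (c : C) (a : nat -> C) l :
  @is_series _ C_R_NormedModule a l ->
  @is_series _ C_R_NormedModule (fun j => (c * a j)%C) (c * l)%C.
Proof. intros H. exact (@is_series_scal C_AbsRing C_NormedModule c a l H). Qed.

Lemma is_series_Cplus (a b : nat -> C) la lb :
  @is_series _ C_R_NormedModule a la -> @is_series _ C_R_NormedModule b lb ->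
  @is_series _ C_R_NormedModule (fun j => (a j + b j)%C) (la + lb)%C.
Proof. intros Ha Hb. exact (@is_series_plus R_AbsRing C_R_NormedModule a b la lb Ha Hb). Qed.

Lemma is_lim_Csum_of_is_series (a : nat -> C) l : @is_series _ C_R_NormedModule a l ->
  is_lim_seq (fun N => fst (Csum a (S N))) (fst l) /\
  is_lim_seq (fun N => snd (Csum a (S N))) (snd l).
Proof.
  intros H. destruct l as [l1 l2].
  split; [apply (is_lim_seq_ext (fun N => fst (@sum_n C_R_NormedModule a N)))
         |apply (is_lim_seq_ext (fun N => snd (@sum_n C_R_NormedModule a N)))];
    try (intros; rewrite sum_n_Csum; reflexivity);
    eapply filterlim_comp; try exact H.
  - apply (continuous_fst (U := R_UniformSpace) (V := R_UniformSpace) l1 l2).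
  - apply (continuous_snd (U := R_UniformSpace) (V := R_UniformSpace) l1 l2).
Qed.

Definition Ccont (f : R -> C) : Prop := Rcont (fun t => fst (f t)) /\ Rcont (fun t => snd (f t)).

Lemma Ccont_const c : Ccont (fun _ => c).
Proof. split; apply Rcont_const. Qed.

Lemma Ccont_RtoC g : Rcont g -> Ccont (fun t => RtoC (g t)).
Proof. intros; split; simpl; auto with Rcont. Qed.

Lemma Ccont_plus f g : Ccont f -> Ccont g -> Ccont (fun t => (f t + g t)%C).
Proof. intros [H1 H2] [H3 H4]; split; simpl; auto with Rcont. Qed.

Lemma Ccont_mult f g : Ccont f -> Ccont g -> Ccont (fun t => (f t * g t)%C).
Proof. intros [H1 H2] [H3 H4]; split; simpl; auto with Rcont. Qed.

Lemma Ccont_opp f : Ccont f -> Ccont (fun t => (- f t)%C).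
Proof. intros [H1 H2]; split; simpl; auto with Rcont. Qed.

Lemma Ccont_minus f g : Ccont f -> Ccont g -> Ccont (fun t => (f t - g t)%C).
Proof. intros. apply Ccont_plus; auto. apply Ccont_opp; auto. Qed.

Lemma Ccont_Csum (f : nat -> R -> C) n :
  (forall j, Ccont (f j)) -> Ccont (fun t => Csum (fun j => f j t) n).
Proof. intros H; induction n; simpl; [apply Ccont_const | apply Ccont_plus; auto]. Qed.

Definition ccos_mul (z : C) (t : R) : C := ccos (z * RtoC t).

Lemma fst_ccos_mul z t : fst (ccos_mul z t) = cos (fst z * t) * cosh (snd z * t).
Proof. unfold ccos_mul, ccos; simpl. f_equal; f_equal; ring. Qed.

Lemma snd_ccos_mul z t : snd (ccos_mul z t) = - (sin (fst z * t) * sinh (snd z * t)).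
Proof. unfold ccos_mul, ccos; simpl. f_equal; f_equal; f_equal; ring. Qed.

Lemma ccos_mul_RtoC r t : ccos_mul (RtoC r) t = RtoC (cos (r * t)).
Proof.
  apply injective_projections; [rewrite fst_ccos_mul | rewrite snd_ccos_mul]; simpl;
    rewrite Rmult_0_l, ?cosh_0, ?sinh_0; ring.
Qed.

Lemma Ccont_ccos_mul z : Ccont (ccos_mul z).
Proof.
  split; [eapply Rcont_ext; [intros; symmetry; apply fst_ccos_mul|]
         |eapply Rcont_ext; [intros; symmetry; apply snd_ccos_mul|]]; auto with Rcont.
Qed.

#[local] Hint Resolve Ccont_plus Ccont_mult Ccont_const Ccont_RtoC Ccont_opp Ccont_minus
  Ccont_ccos_mul Ccont_Csum : Ccont.

Definition Cint (x : R) (f : R -> C) : C :=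
  (rint (fun t => fst (f t)) 0 x, rint (fun t => snd (f t)) 0 x).

Lemma RInt_C_Cint x f : Ccont f -> @RInt C_R_CompleteNormedModule f 0 x = Cint x f.
Proof.
  intros [H1 H2]. unfold Cint, rint. symmetry.
  apply (@RInt_fct_extend_pair R_NormedModule R_NormedModule
           (@RInt R_CompleteNormedModule) (@RInt R_CompleteNormedModule));
    try (intros; apply is_RInt_unique; auto).
  apply (@RInt_correct C_R_CompleteNormedModule).
  apply (@ex_RInt_fct_extend_pair R_NormedModule R_NormedModule f 0 x); apply ex_rint; auto.
Qed.

Lemma Cint_ext x f g : (forall t, f t = g t) -> Cint x f = Cint x g.
Proof. intros H. unfold Cint. f_equal; apply rint_ext; intros; rewrite H; auto. Qed.

Lemma Cint_plus x f g :
  Ccont f -> Ccont g -> Cint x (fun t => (f t + g t)%C) = (Cint x f + Cint x g)%C.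
Proof. intros [H1 H2] [H3 H4]. unfold Cint. simpl. rewrite !rint_plus by auto. reflexivity. Qed.

Lemma Cint_minus x f g :
  Ccont f -> Ccont g -> Cint x (fun t => (f t - g t)%C) = (Cint x f - Cint x g)%C.
Proof.
  intros [H1 H2] [H3 H4]. unfold Cint. simpl. unfold Cminus, Cplus, Copp; simpl.
  rewrite <- !rint_opp, <- !rint_plus by auto with Rcont. reflexivity.
Qed.

Lemma Cint_scal x (c : C) f : Ccont f -> Cint x (fun t => (c * f t)%C) = (c * Cint x f)%C.
Proof.
  intros [H1 H2]. unfold Cint, Cmult. simpl.
  rewrite !rint_plus, !rint_minus, !rint_scal by auto with Rcont. reflexivity.
Qed.

Lemma Cint_Csum x (f : nat -> R -> C) n : (forall j, Ccont (f j)) ->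
  Cint x (fun t => Csum (fun j => f j t) n) = Csum (fun j => Cint x (f j)) n.
Proof.
  intros H. induction n; simpl.
  - unfold Cint. simpl. rewrite !rint_const. apply injective_projections; simpl; ring.
  - rewrite Cint_plus, IHn; auto with Ccont.
Qed.

Lemma Rabs_fst_le_Cmod z : Rabs (fst z) <= Cmod z.
Proof. pose proof (Rmax_Cmod z). pose proof (Rmax_l (Rabs (fst z)) (Rabs (snd z))). lra. Qed.

Lemma Rabs_snd_le_Cmod z : Rabs (snd z) <= Cmod z.
Proof. pose proof (Rmax_Cmod z). pose proof (Rmax_r (Rabs (fst z)) (Rabs (snd z))). lra. Qed.

Lemma Cmod_sqr z : Cmod z ^ 2 = fst z ^ 2 + snd z ^ 2.
Proof. unfold Cmod. rewrite pow2_sqrt; auto. nra. Qed.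

Lemma Cmod_le_Rabs_fst_snd z : Cmod z <= Rabs (fst z) + Rabs (snd z).
Proof.
  pose proof (Rabs_pos (fst z)); pose proof (Rabs_pos (snd z)).
  apply Rsqr_incr_0_var; [|lra].
  rewrite !Rsqr_pow2, Cmod_sqr, <- (pow2_abs (fst z)), <- (pow2_abs (snd z)) at 1.
  nra.
Qed.

Lemma Cmod_mul_le (a b : C) A B : Cmod a <= A -> Cmod b <= B -> Cmod (a * b)%C <= A * B.
Proof. intros. rewrite Cmod_mult. apply Rmult_le_compat; auto using Cmod_ge_0. Qed.

Lemma Cmod_minus_le a b : Cmod (a - b) <= Cmod a + Cmod b.
Proof. unfold Cminus. eapply Rle_trans; [apply Cmod_triangle|]. rewrite Cmod_opp. lra. Qed.

Lemma Cmod_le_minus_add a b : Cmod a <= Cmod (a - b) + Cmod b.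
Proof. replace a with ((a - b) + b)%C at 1 by ring. apply Cmod_triangle. Qed.

Lemma is_lim_seq_Cmod (u : nat -> C) (l : C) :
  is_lim_seq (fun N => fst (u N)) (fst l) -> is_lim_seq (fun N => snd (u N)) (snd l) ->
  is_lim_seq (fun N => Cmod (u N)) (Cmod l).
Proof.
  intros H1 H2. unfold Cmod.
  apply (is_lim_seq_continuous sqrt (fun N => fst (u N) ^ 2 + snd (u N) ^ 2)).
  - apply continuity_pt_sqrt. pose proof (pow2_ge_0 (fst l)); pose proof (pow2_ge_0 (snd l)). lra.
  - apply is_lim_seq_plus'; apply is_lim_seq_sqr; assumption.
Qed.

Lemma fst_Cmult_RtoC (z : C) a : fst (z * RtoC a)%C = fst z * a.
Proof. simpl. ring. Qed.

Lemma snd_Cmult_RtoC (z : C) a : snd (z * RtoC a)%C = snd z * a.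
Proof. simpl. ring. Qed.

Lemma csqrt_RtoC_sqr r : 0 <= r -> csqrt (RtoC (r * r)) = RtoC r.
Proof.
  intros Hr. unfold csqrt, RtoC. simpl.
  assert (E : Cmod (r * r, 0) = r * r).
  { unfold Cmod; simpl. replace ((r * r) * ((r * r) * 1) + 0 * (0 * 1)) with ((r * r) ^ 2) by ring.
    apply sqrt_pow2. nra. }
  rewrite E. destruct (Rlt_dec 0 0); [lra|].
  apply injective_projections; simpl.
  - replace ((r * r + r * r) / 2) with (r ^ 2) by field. apply sqrt_pow2; auto.
  - replace ((r * r - r * r) / 2) with 0 by field. rewrite sqrt_0. ring.
Qed.

Lemma csin_RtoC a b : csin (RtoC a * RtoC b) = RtoC (sin (a * b)).
Proof.
  unfold csin. apply injective_projections; simpl.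
  - replace (a * b - 0 * 0) with (a * b) by ring. replace (a * 0 + 0 * b) with 0 by ring.
    rewrite cosh_0. ring.
  - replace (a * 0 + 0 * b) with 0 by ring. rewrite sinh_0. ring.
Qed.

Lemma Rabs_alphat_le1 p k : Rabs (alphat p k) <= 1.
Proof.
  pose proof PI2_1 as H.
  assert (Rabs (2 / PI) <= 1).
  { rewrite Rabs_right by (left; apply Rdiv_lt_0_compat; lra).
    apply Rmult_le_reg_l with PI; [lra|]. field_simplify; lra. }
  assert (Rabs (1 / PI) <= 1).
  { rewrite Rabs_right by (left; apply Rdiv_lt_0_compat; lra).
    apply Rmult_le_reg_l with PI; [lra|]. field_simplify; lra. }
  unfold alphat. destruct (k =? 1)%nat; [|destruct (k <=? p + 1)%nat]; auto.
  rewrite Rabs_R0; lra.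
Qed.

Lemma xi_ge0 p lam alpha k : 0 <= xi p lam alpha k.
Proof.
  unfold xi. pose proof (Cmod_ge_0 (rho lam k - RtoC (rhot p k))).
  pose proof (Cmod_ge_0 (alpha k - RtoC (alphat p k))). lra.
Qed.

Lemma Cmod_rhohat_le_xi p lam alpha k : Cmod (rhohat p lam k) <= xi p lam alpha k.
Proof. unfold xi, rhohat. pose proof (Cmod_ge_0 (alpha k - RtoC (alphat p k))). lra. Qed.

Lemma Cmod_alpha_sub_le_xi p lam alpha k : Cmod (alpha k - RtoC (alphat p k)) <= xi p lam alpha k.
Proof. unfold xi. pose proof (Cmod_ge_0 (rho lam k - RtoC (rhot p k))). lra. Qed.

Lemma Cmod_alpha_le p lam alpha k : Cmod (alpha k) <= 1 + xi p lam alpha k.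
Proof.
  eapply Rle_trans; [apply (Cmod_le_minus_add _ (RtoC (alphat p k)))|]. rewrite Cmod_R.
  pose proof (Cmod_alpha_sub_le_xi p lam alpha k). pose proof (Rabs_alphat_le1 p k). lra.
Qed.

Lemma csqrt_lami p lam n i : csqrt (lami p lam n i) = rhoi p lam n i.
Proof. destruct i; [apply csqrt_RtoC_sqr, rhot_ge0 | reflexivity]. Qed.

(* [ucoef k] is the first component of [T_k^{-1} psi_k]; the second one is [psi_k1]. *)
Definition ucoef p lam (psi : nat -> vec2) k : C := (rhohat p lam k * fst (psi k) + snd (psi k))%C.

Definition Fterm p lam alpha psi k t : C :=
  ((alpha k * ucoef p lam psi k) * ccos_mul (rho lam k) t
   - (RtoC (alphat p k) * snd (psi k)) * ccos_mul (RtoC (rhot p k)) t)%C.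

Definition Fsum p lam alpha psi M t : C := Csum (fun j => Fterm p lam alpha psi (S j) t) M.

Definition gterm p lam alpha x (psi : nat -> vec2) n (i : bool) j : C :=
  (if i then @snd C C else @fst C C)
    (mv (Qmat p lam alpha x n (S j)) (mv (Tinv p lam (S j)) (psi (S j)))).

Lemma Ccont_Fterm p lam alpha psi k : Ccont (Fterm p lam alpha psi k).
Proof. unfold Fterm; auto with Ccont. Qed.

Lemma Ccont_Fsum p lam alpha psi M : Ccont (Fsum p lam alpha psi M).
Proof. unfold Fsum. apply Ccont_Csum. intros; apply Ccont_Fterm. Qed.

#[local] Hint Resolve Ccont_Fterm Ccont_Fsum : Ccont.

Lemma Dt_Cint x z w : Dt x z w = Cint x (fun t => (ccos_mul (csqrt z) t * ccos_mul (csqrt w) t)%C).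
Proof. apply RInt_C_Cint. auto with Ccont. Qed.

Lemma gterm_Cint p lam alpha x psi n i j :
  gterm p lam alpha x psi n i j
  = Cint x (fun t => (ccos_mul (rhoi p lam n i) t * Fterm p lam alpha psi (S j) t)%C).
Proof.
  set (k := S j).
  assert (E : forall i, (Qt p lam alpha x n i k false * (rhohat p lam k * fst (psi k) + RtoC 1 * snd (psi k))
     + (- Qt p lam alpha x n i k true) * (RtoC 0 * fst (psi k) + RtoC 1 * snd (psi k)))%C
    = Cint x (fun t => (ccos_mul (rhoi p lam n i) t * Fterm p lam alpha psi k t)%C)).
  { intros i'. unfold Qt. rewrite !Dt_Cint, csqrt_lami. cbn [lami alphai].
    rewrite (csqrt_RtoC_sqr (rhot p k)) by apply rhot_ge0.
    change (csqrt (lam k)) with (rho lam k).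
    rewrite (Cint_ext x (fun t => (ccos_mul (rhoi p lam n i') t * Fterm p lam alpha psi k t)%C) (fun t =>
      ((alpha k * ucoef p lam psi k) * (ccos_mul (rhoi p lam n i') t * ccos_mul (rho lam k) t)
       + (- (RtoC (alphat p k) * snd (psi k)))
         * (ccos_mul (rhoi p lam n i') t * ccos_mul (RtoC (rhot p k)) t))%C))
      by (intros; unfold Fterm; ring).
    rewrite Cint_plus, !Cint_scal by auto with Ccont.
    unfold ucoef. ring. }
  unfold gterm, mv, Qmat, Tinv. destruct i; cbn [fst snd]; apply E.
Qed.

Lemma Csum_gterm p lam alpha x psi n i M :
  Csum (gterm p lam alpha x psi n i) M
  = Cint x (fun t => (ccos_mul (rhoi p lam n i) t * Fsum p lam alpha psi M t)%C).
Proof.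
  unfold Fsum. rewrite (Cint_ext x _ (fun t => Csum (fun j =>
    (ccos_mul (rhoi p lam n i) t * Fterm p lam alpha psi (S j) t)%C) M)) by (intros; apply Csum_mult_l).
  rewrite Cint_Csum by auto with Ccont.
  apply Csum_ext; intros; apply gterm_Cint.
Qed.

Definition cos_rem p lam k t : C :=
  (ccos_mul (rho lam k) t - RtoC (cos (rhot p k * t))
   + rhohat p lam k * RtoC (t * sin (rhot p k * t)))%C.

Lemma Ccont_cos_rem p lam k : Ccont (cos_rem p lam k).
Proof.
  unfold cos_rem. apply Ccont_plus; [apply Ccont_minus | apply Ccont_mult]; auto with Ccont Rcont.
Qed.

#[local] Hint Resolve Ccont_cos_rem : Ccont.

Definition Acoef p lam alpha psi k : C :=
  (alpha k * ucoef p lam psi k - RtoC (alphat p k) * snd (psi k))%C.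
Definition Ecoef p lam alpha psi k : C := (alpha k * ucoef p lam psi k * rhohat p lam k)%C.
Definition Bcoef p lam alpha psi k : C := (alpha k * ucoef p lam psi k)%C.

Lemma Fterm_decomp p lam alpha psi k t :
  Fterm p lam alpha psi k t =
  (Acoef p lam alpha psi k * RtoC (cos (rhot p k * t))
   - Ecoef p lam alpha psi k * RtoC (t * sin (rhot p k * t))
   + Bcoef p lam alpha psi k * cos_rem p lam k t)%C.
Proof. unfold Fterm, Acoef, Ecoef, Bcoef, cos_rem. rewrite ccos_mul_RtoC. ring. Qed.

Definition taylor_const Om := 2 * PI ^ 2 * exp (PI * Om).

Lemma taylor_const_pos Om : 0 < taylor_const Om.
Proof.
  unfold taylor_const. pose proof PI_RGT_0. pose proof (exp_pos (PI * Om)). pose proof (pow_lt PI 2).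
  nra.
Qed.

Lemma cos_rem_le p lam Om k t : Cmod (rhohat p lam k) <= Om -> 0 <= t <= PI ->
  Rabs (fst (cos_rem p lam k t)) <= taylor_const Om * Cmod (rhohat p lam k) ^ 2 /\
  Rabs (snd (cos_rem p lam k t)) <= taylor_const Om * Cmod (rhohat p lam k) ^ 2.
Proof.
  intros Hd Ht.
  set (d := rhohat p lam k) in *.
  assert (Hd1 : Rabs (fst d) <= Om) by (pose proof (Rabs_fst_le_Cmod d); lra).
  assert (Hd2 : Rabs (snd d) <= Om) by (pose proof (Rabs_snd_le_Cmod d); lra).
  assert (E1 : fst (rho lam k) = rhot p k + fst d) by (unfold d, rhohat; simpl; ring).
  assert (E2 : snd (rho lam k) = snd d) by (unfold d, rhohat; simpl; ring).
  rewrite Cmod_sqr. unfold cos_rem, taylor_const. fold d. split.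
  - unfold Cminus, Cplus, Copp. cbn [fst snd]. rewrite fst_Cmult_RtoC, fst_ccos_mul, E1, E2. simpl (fst (RtoC _)).
    replace (cos ((rhot p k + fst d) * t) * cosh (snd d * t) + - cos (rhot p k * t) +
      fst d * (t * sin (rhot p k * t)))
      with (cos ((rhot p k + fst d) * t) * cosh (snd d * t) - cos (rhot p k * t)
            + fst d * t * sin (rhot p k * t)) by ring.
    apply ccos_taylor1_re_le; auto.
  - unfold Cminus, Cplus, Copp. cbn [fst snd]. rewrite snd_Cmult_RtoC, snd_ccos_mul, E1, E2. simpl (snd (RtoC _)).
    match goal with |- Rabs ?e <= _ =>
      replace e with (- (sin ((rhot p k + fst d) * t) * sinh (snd d * t)) + snd d * t * sin (rhot p k * t))
        by ring end.
    apply ccos_taylor1_im_le; auto.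
Qed.

Definition Cproj (pr : C -> R) : Prop := pr = fst \/ pr = snd.

Lemma Cproj_Csum pr f n : Cproj pr -> pr (Csum f n) = rsum (fun j => pr (f j)) n.
Proof. intros [-> | ->]; [apply fst_Csum | apply snd_Csum]. Qed.

Lemma Cproj_plus pr a b : Cproj pr -> pr (a + b)%C = pr a + pr b.
Proof. intros [-> | ->]; reflexivity. Qed.

Lemma Cproj_minus pr a b : Cproj pr -> pr (a - b)%C = pr a - pr b.
Proof. intros [-> | ->]; simpl; ring. Qed.

Lemma Cproj_Cmult_RtoC pr z a : Cproj pr -> pr (z * RtoC a)%C = pr z * a.
Proof. intros [-> | ->]; simpl; ring. Qed.

Lemma Cproj_Rcont pr f : Cproj pr -> Ccont f -> Rcont (fun t => pr (f t)).
Proof. intros [-> | ->] [H1 H2]; auto. Qed.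

Lemma Rabs_Cproj_le pr z : Cproj pr -> Rabs (pr z) <= Cmod z.
Proof. intros [-> | ->]; [apply Rabs_fst_le_Cmod | apply Rabs_snd_le_Cmod]. Qed.

Lemma sqr_sub_add_le a b c : (a - b + c) ^ 2 <= 3 * (a ^ 2 + b ^ 2 + c ^ 2).
Proof.
  pose proof (pow2_ge_0 (a + b)); pose proof (pow2_ge_0 (a - c)); pose proof (pow2_ge_0 (b + c)).
  nra.
Qed.

Lemma rsum_fst_snd_sqr_le (f : nat -> C) c (w : nat -> R) M Om :
  0 <= c -> (forall j, Cmod (f j) <= c * w j) -> (forall j, 0 <= w j) ->
  rsum (fun j => w j ^ 2) M <= Om ^ 2 ->
  rsum (fun j => fst (f j) ^ 2) M + rsum (fun j => snd (f j) ^ 2) M <= c ^ 2 * Om ^ 2.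
Proof.
  intros Hc Hf Hw Hs. rewrite <- rsum_plus.
  eapply Rle_trans; [apply (rsum_le _ (fun j => c ^ 2 * w j ^ 2))|].
  - intros j _. rewrite <- Cmod_sqr, <- Rpow_mult_distr. apply pow_incr.
    split; [apply Cmod_ge_0 | auto].
  - rewrite rsum_scal. apply Rmult_le_compat_l; auto. apply pow2_ge_0.
Qed.

Definition Bcoef_bound Om B := (1 + Om) * ((Om + 1) * B).
Definition rem_sum_bound Om B := 2 * Bcoef_bound Om B * taylor_const Om * Om ^ 2.
Definition F_L2_bound p Om B :=
  3 * ((INR p + 2) * PI * (((2 + Om) * B) ^ 2 * Om ^ 2)
       + PI ^ 3 * (Bcoef_bound Om B ^ 2 * Om ^ 2) + 2 * (PI * rem_sum_bound Om B ^ 2)).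
Definition g1_bound p Om B := (INR p + 2) * PI * F_L2_bound p Om B.
Definition gdiff_bound p Om B :=
  (2 * taylor_const Om * (PI + F_L2_bound p Om B / 2) + 1) * Om ^ 2 + PI ^ 3 * F_L2_bound p Om B.

Definition gdiff_partial p lam alpha psi x M n : C :=
  Cint x (fun t => ((ccos_mul (rho lam n) t - ccos_mul (RtoC (rhot p n)) t)
                    * Fsum p lam alpha psi M t)%C).

Section PartialSumBounds.

Variables (p : nat) (lam alpha : nat -> C) (psi : nat -> vec2) (Om B x : R).
Hypotheses (Om_pos : 0 < Om) (B_ge0 : 0 <= B) (x_range : 0 <= x <= PI).
Hypothesis rsum_xi_sqr_le : forall M, rsum (fun j => xi p lam alpha (S j) ^ 2) M <= Om ^ 2.
Hypothesis psi_le : forall k, (1 <= k)%nat -> Cmod (fst (psi k)) <= B /\ Cmod (snd (psi k)) <= B.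

Local Notation F := (Fsum p lam alpha psi).

Lemma xi_le_Om k : (1 <= k)%nat -> xi p lam alpha k <= Om.
Proof.
  intros Hk.
  assert (xi p lam alpha k ^ 2 <= Om ^ 2).
  { replace k with (S (k - 1)) by lia. eapply Rle_trans; [|apply (rsum_xi_sqr_le k)].
    apply (rsum_term_le (fun j => xi p lam alpha (S j) ^ 2)); [lia | intros; apply pow2_ge_0]. }
  pose proof (xi_ge0 p lam alpha k). nra.
Qed.

Lemma Bcoef_bound_ge0 : 0 <= Bcoef_bound Om B.
Proof. unfold Bcoef_bound. apply Rmult_le_pos; [lra | apply Rmult_le_pos; lra]. Qed.

Lemma F_L2_bound_ge0 : 0 <= F_L2_bound p Om B.
Proof.
  unfold F_L2_bound. pose proof PI_RGT_0. pose proof (pos_INR p).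
  pose proof (pow2_ge_0 ((2 + Om) * B)); pose proof (pow2_ge_0 Om);
  pose proof (pow2_ge_0 (Bcoef_bound Om B)); pose proof (pow2_ge_0 (rem_sum_bound Om B)).
  assert (0 <= PI ^ 3) by (apply pow_le; lra).
  assert (0 <= (INR p + 2) * PI) by nra.
  assert (0 <= ((2 + Om) * B) ^ 2 * Om ^ 2) by nra.
  assert (0 <= Bcoef_bound Om B ^ 2 * Om ^ 2) by nra.
  nra.
Qed.

Lemma g1_bound_ge0 : 0 <= g1_bound p Om B.
Proof.
  unfold g1_bound. pose proof F_L2_bound_ge0. pose proof (pos_INR p). pose proof PI_RGT_0.
  apply Rmult_le_pos; [nra | auto].
Qed.

Lemma gdiff_bound_ge0 : 0 <= gdiff_bound p Om B.
Proof.
  unfold gdiff_bound. pose proof F_L2_bound_ge0. pose proof (taylor_const_pos Om). pose proof PI_RGT_0.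
  pose proof (pow2_ge_0 Om). assert (0 <= PI ^ 3) by (apply pow_le; lra).
  assert (0 <= 2 * taylor_const Om * (PI + F_L2_bound p Om B / 2) + 1) by nra.
  apply Rplus_le_le_0_compat; apply Rmult_le_pos; auto.
Qed.

Section CoefficientBounds.

Variable k : nat.
Hypothesis k_ge1 : (1 <= k)%nat.

Lemma Cmod_ucoef_le : Cmod (ucoef p lam psi k) <= (Om + 1) * B.
Proof.
  pose proof (xi_le_Om k k_ge1). pose proof (Cmod_rhohat_le_xi p lam alpha k).
  destruct (psi_le k k_ge1).
  unfold ucoef. eapply Rle_trans; [apply Cmod_triangle|].
  assert (Cmod (rhohat p lam k * fst (psi k)) <= Om * B) by (apply Cmod_mul_le; lra). lra.
Qed.

Lemma Cmod_Acoef_le : Cmod (Acoef p lam alpha psi k) <= (2 + Om) * B * xi p lam alpha k.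
Proof.
  pose proof (xi_le_Om k k_ge1). pose proof (xi_ge0 p lam alpha k).
  pose proof (Cmod_rhohat_le_xi p lam alpha k). pose proof (Cmod_alpha_sub_le_xi p lam alpha k).
  pose proof (Cmod_alpha_le p lam alpha k). destruct (psi_le k k_ge1).
  set (X := xi p lam alpha k) in *.
  unfold Acoef, ucoef.
  replace (alpha k * (rhohat p lam k * fst (psi k) + snd (psi k)) - RtoC (alphat p k) * snd (psi k))%C
    with (alpha k * rhohat p lam k * fst (psi k) + (alpha k - RtoC (alphat p k)) * snd (psi k))%C by ring.
  eapply Rle_trans; [apply Cmod_triangle|].
  assert (Cmod (alpha k * rhohat p lam k * fst (psi k)) <= (1 + Om) * X * B)
    by (apply Cmod_mul_le; [apply Cmod_mul_le|]; lra).
  assert (Cmod ((alpha k - RtoC (alphat p k)) * snd (psi k)) <= X * B) by (apply Cmod_mul_le; lra).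
  nra.
Qed.

Lemma Cmod_Bcoef_le : Cmod (Bcoef p lam alpha psi k) <= Bcoef_bound Om B.
Proof.
  pose proof (xi_le_Om k k_ge1). pose proof (Cmod_alpha_le p lam alpha k).
  apply Cmod_mul_le; [lra | apply Cmod_ucoef_le].
Qed.

Lemma Cmod_Ecoef_le : Cmod (Ecoef p lam alpha psi k) <= Bcoef_bound Om B * xi p lam alpha k.
Proof. apply Cmod_mul_le; [apply Cmod_Bcoef_le | apply Cmod_rhohat_le_xi]. Qed.

Lemma cos_rem_le_xi t : 0 <= t <= PI ->
  Rabs (fst (cos_rem p lam k t)) <= taylor_const Om * xi p lam alpha k ^ 2 /\
  Rabs (snd (cos_rem p lam k t)) <= taylor_const Om * xi p lam alpha k ^ 2.
Proof.
  intros Ht. pose proof (xi_le_Om k k_ge1). pose proof (Cmod_rhohat_le_xi p lam alpha k).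
  pose proof (taylor_const_pos Om).
  destruct (cos_rem_le p lam Om k t ltac:(lra) Ht) as [HR1 HR2].
  assert (Cmod (rhohat p lam k) ^ 2 <= xi p lam alpha k ^ 2) by (apply pow_incr; split; auto using Cmod_ge_0).
  split; (eapply Rle_trans; [eassumption|]); apply Rmult_le_compat_l; lra.
Qed.

End CoefficientBounds.

Lemma Rabs_rsum_Bcoef_cos_rem_le M pr t : Cproj pr -> 0 <= t <= PI ->
  Rabs (rsum (fun j => pr (Bcoef p lam alpha psi (S j) * cos_rem p lam (S j) t)%C) M)
  <= rem_sum_bound Om B.
Proof.
  intros Hpr Ht. eapply Rle_trans; [apply Rabs_rsum_le|].
  eapply Rle_trans.
  { apply (rsum_le _ (fun j => 2 * Bcoef_bound Om B * taylor_const Om * xi p lam alpha (S j) ^ 2)).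
    intros j _. eapply Rle_trans; [apply Rabs_Cproj_le; auto|]. rewrite Cmod_mult.
    destruct (cos_rem_le_xi (S j) ltac:(lia) t Ht) as [HR1 HR2].
    pose proof (Cmod_le_Rabs_fst_snd (cos_rem p lam (S j) t)).
    replace (2 * Bcoef_bound Om B * taylor_const Om * xi p lam alpha (S j) ^ 2)
      with (Bcoef_bound Om B * (2 * (taylor_const Om * xi p lam alpha (S j) ^ 2))) by ring.
    apply Rmult_le_compat; auto using Cmod_ge_0, Cmod_Bcoef_le with arith; lra. }
  rewrite rsum_scal. unfold rem_sum_bound.
  pose proof Bcoef_bound_ge0. pose proof (taylor_const_pos Om).
  apply Rmult_le_compat_l; [|apply rsum_xi_sqr_le].
  apply Rmult_le_pos; [apply Rmult_le_pos|]; lra.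
Qed.

(* [F] splits into a combination of the model system [cos (rhot_k t)], one of [t sin (rhot_k t)],
   both with square-summable coefficients, and a uniformly small Taylor remainder. *)
Lemma rint_Fsum_comp_sqr_le pr M : Cproj pr ->
  rint (fun t => pr (F M t) ^ 2) 0 x <=
  3 * ((INR p + 2) * PI * rsum (fun j => pr (Acoef p lam alpha psi (S j)) ^ 2) M
       + PI ^ 3 * rsum (fun j => pr (Ecoef p lam alpha psi (S j)) ^ 2) M + PI * rem_sum_bound Om B ^ 2).
Proof.
  intros Hpr.
  set (X := fun t => rsum (fun j => pr (Acoef p lam alpha psi (S j)) * cos (rhot p (S j) * t)) M).
  set (Y := fun t => rsum (fun j => pr (Ecoef p lam alpha psi (S j)) * (t * sin (rhot p (S j) * t))) M).
  set (Z := fun t => rsum (fun j => pr (Bcoef p lam alpha psi (S j) * cos_rem p lam (S j) t)%C) M).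
  assert (HX : Rcont X) by (unfold X; auto with Rcont).
  assert (HY : Rcont Y) by (unfold Y; auto with Rcont).
  assert (HZ : Rcont Z).
  { unfold Z. apply Rcont_rsum; intros j. apply Cproj_Rcont; auto.
    apply Ccont_mult; [apply Ccont_const | apply Ccont_cos_rem]. }
  assert (Hdec : forall t, pr (F M t) = X t - Y t + Z t).
  { intros t. unfold F, Fsum. rewrite Cproj_Csum by auto. unfold X, Y, Z.
    rewrite <- rsum_minus, <- rsum_plus. apply rsum_ext; intros j _.
    rewrite Fterm_decomp, Cproj_plus, Cproj_minus, !Cproj_Cmult_RtoC by auto. ring. }
  rewrite (rint_ext _ (fun t => (X t - Y t + Z t) ^ 2)) by (intros; rewrite Hdec; auto).
  eapply Rle_trans.
  { apply (rint_le _ (fun t => 3 * (X t ^ 2 + Y t ^ 2 + Z t ^ 2))); [lra | auto with Rcont | auto with Rcont|].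
    intros; apply sqr_sub_add_le. }
  rewrite rint_scal, rint_plus, rint_plus by auto with Rcont.
  assert (rint (fun t => X t ^ 2) 0 x
          <= (INR p + 2) * PI * rsum (fun j => pr (Acoef p lam alpha psi (S j)) ^ 2) M)
    by (unfold X; apply riesz_cos_rhot; auto).
  assert (rint (fun t => Y t ^ 2) 0 x <= PI ^ 3 * rsum (fun j => pr (Ecoef p lam alpha psi (S j)) ^ 2) M)
    by (unfold Y; apply riesz_t_sin_rhot; auto).
  assert (rint (fun t => Z t ^ 2) 0 x <= rem_sum_bound Om B ^ 2 * (x - 0)).
  { apply rint_le_const; [lra | auto with Rcont|]. intros t Ht.
    rewrite <- (pow2_abs (Z t)). apply pow_incr. split; [apply Rabs_pos|].
    apply Rabs_rsum_Bcoef_cos_rem_le; auto; lra. }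
  assert (rem_sum_bound Om B ^ 2 * (x - 0) <= PI * rem_sum_bound Om B ^ 2)
    by (pose proof (pow2_ge_0 (rem_sum_bound Om B)); nra).
  lra.
Qed.

Lemma rint_Fsum_sqr_le M :
  rint (fun t => fst (F M t) ^ 2) 0 x + rint (fun t => snd (F M t) ^ 2) 0 x <= F_L2_bound p Om B.
Proof.
  pose proof (rint_Fsum_comp_sqr_le fst M (or_introl eq_refl)).
  pose proof (rint_Fsum_comp_sqr_le snd M (or_intror eq_refl)).
  assert (HA : rsum (fun j => fst (Acoef p lam alpha psi (S j)) ^ 2) M
               + rsum (fun j => snd (Acoef p lam alpha psi (S j)) ^ 2) M <= ((2 + Om) * B) ^ 2 * Om ^ 2).
  { apply (rsum_fst_snd_sqr_le _ _ (fun j => xi p lam alpha (S j))); auto.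
    - apply Rmult_le_pos; lra.
    - intros j; apply Cmod_Acoef_le; lia.
    - intros; apply xi_ge0. }
  assert (HE : rsum (fun j => fst (Ecoef p lam alpha psi (S j)) ^ 2) M
               + rsum (fun j => snd (Ecoef p lam alpha psi (S j)) ^ 2) M <= Bcoef_bound Om B ^ 2 * Om ^ 2).
  { apply (rsum_fst_snd_sqr_le _ _ (fun j => xi p lam alpha (S j))); auto.
    - apply Bcoef_bound_ge0.
    - intros j; apply Cmod_Ecoef_le; lia.
    - intros; apply xi_ge0. }
  unfold F_L2_bound. pose proof PI_RGT_0. pose proof (pos_INR p).
  assert (0 <= PI ^ 3) by (apply pow_le; lra).
  assert (0 <= (INR p + 2) * PI) by nra.
  nra.
Qed.

Lemma rsum_Cint_cos_rhot_sqr_le M N :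
  rsum (fun j => Cmod (Cint x (fun t => (ccos_mul (RtoC (rhot p (S j))) t * F M t)%C)) ^ 2) N
  <= g1_bound p Om B.
Proof.
  destruct (Ccont_Fsum p lam alpha psi M) as [HF1 HF2].
  rewrite (rsum_ext _ (fun j => (rint (fun t => cos (rhot p (S j) * t) * fst (F M t)) 0 x) ^ 2
                               + (rint (fun t => cos (rhot p (S j) * t) * snd (F M t)) 0 x) ^ 2)).
  - rewrite rsum_plus.
    pose proof (bessel_cos_rhot p x x_range N _ HF1). pose proof (bessel_cos_rhot p x x_range N _ HF2).
    pose proof (rint_Fsum_sqr_le M). unfold g1_bound.
    assert (0 <= (INR p + 2) * PI) by (pose proof (pos_INR p); pose proof PI_RGT_0; nra).
    nra.
  - intros j _. rewrite Cmod_sqr. unfold Cint. cbn [fst snd].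
    f_equal; f_equal; apply rint_ext; intros; rewrite ccos_mul_RtoC; simpl; ring.
Qed.

Lemma Rabs_Cint_cos_rem_le M n pr : (1 <= n)%nat -> Cproj pr ->
  Rabs (pr (Cint x (fun t => (cos_rem p lam n t * F M t)%C)))
  <= taylor_const Om * xi p lam alpha n ^ 2 * (PI + F_L2_bound p Om B / 2).
Proof.
  intros Hn Hpr.
  destruct (Ccont_Fsum p lam alpha psi M) as [HF1 HF2].
  set (c := taylor_const Om * xi p lam alpha n ^ 2).
  assert (Hc : 0 <= c) by (pose proof (taylor_const_pos Om); pose proof (pow2_ge_0 (xi p lam alpha n));
                           unfold c; nra).
  set (g := fun t => c * (/ 2 * (1 + fst (F M t) ^ 2)) + c * (/ 2 * (1 + snd (F M t) ^ 2))).
  assert (Hgc : Rcont g) by (unfold g; auto 10 with Rcont).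
  assert (Hhalf : forall a, Rabs a <= / 2 * (1 + a ^ 2)).
  { intros a. pose proof (Rabs_mul_le_half_sq 1 a). rewrite Rabs_R1 in H. lra. }
  assert (Hpt : forall t, 0 <= t <= x -> forall a b, Rabs a <= c -> Rabs b <= c ->
     Rabs (a * fst (F M t)) + Rabs (b * snd (F M t)) <= g t).
  { intros t Ht a b Ha Hb. unfold g. rewrite !Rabs_mult.
    apply Rplus_le_compat; apply Rmult_le_compat; auto using Rabs_pos. }
  assert (Hg_int : rint g 0 x <= c * (PI + F_L2_bound p Om B / 2)).
  { unfold g. rewrite rint_plus, !rint_scal by auto 10 with Rcont.
    rewrite !rint_plus, !rint_const by auto 10 with Rcont.
    pose proof (rint_Fsum_sqr_le M). nra. }
  eapply Rle_trans; [|apply Hg_int].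
  assert (HR : forall t, 0 <= t <= x ->
            Rabs (fst (cos_rem p lam n t)) <= c /\ Rabs (snd (cos_rem p lam n t)) <= c)
    by (intros t Ht; apply cos_rem_le_xi; auto; lra).
  destruct (Ccont_cos_rem p lam n) as [HR1 HR2].
  destruct Hpr as [-> | ->]; unfold Cint; cbn [fst snd];
    (apply Rabs_rint_le; [lra | | exact Hgc | intros t Ht; destruct (HR t Ht)]).
  - simpl. auto with Rcont.
  - eapply Rle_trans; [apply Rabs_triang|]. rewrite Rabs_Ropp. apply Hpt; auto.
  - simpl. auto with Rcont.
  - eapply Rle_trans; [apply Rabs_triang|]. rewrite Rplus_comm. apply Hpt; auto.
Qed.

Lemma gdiff_partial_eq M n :
  gdiff_partial p lam alpha psi x M n
  = (Cint x (fun t => (ccos_mul (rho lam n) t * F M t)%C)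
     - Cint x (fun t => (ccos_mul (RtoC (rhot p n)) t * F M t)%C))%C.
Proof. unfold gdiff_partial. rewrite <- Cint_minus by auto with Ccont. apply Cint_ext; intros; ring. Qed.

Lemma gdiff_partial_decomp M n :
  gdiff_partial p lam alpha psi x M n
  = (Cint x (fun t => (cos_rem p lam n t * F M t)%C)
     - rhohat p lam n * Cint x (fun t => (RtoC (t * sin (rhot p n * t)) * F M t)%C))%C.
Proof.
  unfold gdiff_partial.
  rewrite <- Cint_scal, <- Cint_minus by auto 6 with Ccont Rcont.
  apply Cint_ext; intros t. unfold cos_rem. rewrite ccos_mul_RtoC. ring.
Qed.

(* Each difference is [O(xi_n^2)] plus [xi_n] times the [n]-th Bessel coefficient of [F]
   for the system [t sin (rhot_n t)]; AM-GM turns the product into two summable squares. *)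
Lemma Cmod_gdiff_partial_le M n : (1 <= n)%nat ->
  let e := Cint x (fun t => (RtoC (t * sin (rhot p n * t)) * F M t)%C) in
  Cmod (gdiff_partial p lam alpha psi x M n)
  <= (2 * taylor_const Om * (PI + F_L2_bound p Om B / 2) + 1) * xi p lam alpha n ^ 2
     + (fst e ^ 2 + snd e ^ 2).
Proof.
  intros Hn e. rewrite gdiff_partial_decomp. fold e.
  set (q := Cint x (fun t => (cos_rem p lam n t * F M t)%C)).
  pose proof (Rabs_Cint_cos_rem_le M n fst Hn (or_introl eq_refl)) as Q1.
  pose proof (Rabs_Cint_cos_rem_le M n snd Hn (or_intror eq_refl)) as Q2.
  fold q in Q1, Q2.
  pose proof (Cmod_le_Rabs_fst_snd q).
  assert (Hw : Cmod (rhohat p lam n * e) <= xi p lam alpha n * Cmod e).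
  { rewrite Cmod_mult. apply Rmult_le_compat_r; [apply Cmod_ge_0 | apply Cmod_rhohat_le_xi]. }
  assert (2 * (xi p lam alpha n * Cmod e) <= xi p lam alpha n ^ 2 + (fst e ^ 2 + snd e ^ 2)).
  { rewrite <- Cmod_sqr. pose proof (pow2_ge_0 (xi p lam alpha n - Cmod e)). nra. }
  pose proof (Cmod_minus_le q (rhohat p lam n * e)).
  pose proof (taylor_const_pos Om). pose proof PI_RGT_0. pose proof F_L2_bound_ge0.
  pose proof (pow2_ge_0 (xi p lam alpha n)).
  nra.
Qed.

Lemma rsum_Cmod_gdiff_partial_le M N :
  rsum (fun j => Cmod (gdiff_partial p lam alpha psi x M (S j))) N <= gdiff_bound p Om B.
Proof.
  destruct (Ccont_Fsum p lam alpha psi M) as [HF1 HF2].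
  set (e := fun n => Cint x (fun t => (RtoC (t * sin (rhot p n * t)) * F M t)%C)).
  set (K1 := 2 * taylor_const Om * (PI + F_L2_bound p Om B / 2) + 1).
  eapply Rle_trans.
  { apply (rsum_le _ (fun j => K1 * xi p lam alpha (S j) ^ 2 + (fst (e (S j)) ^ 2 + snd (e (S j)) ^ 2))).
    intros j _. apply Cmod_gdiff_partial_le; lia. }
  rewrite rsum_plus, rsum_scal, rsum_plus.
  assert (HE1 : rsum (fun j => fst (e (S j)) ^ 2) N <= PI ^ 3 * rint (fun t => fst (F M t) ^ 2) 0 x).
  { eapply Rle_trans; [|apply (bessel_t_sin_rhot p x x_range N _ HF1)]. right. apply rsum_ext; intros j _.
    unfold e, Cint. cbn [fst]. f_equal. apply rint_ext; intros. simpl. ring. }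
  assert (HE2 : rsum (fun j => snd (e (S j)) ^ 2) N <= PI ^ 3 * rint (fun t => snd (F M t) ^ 2) 0 x).
  { eapply Rle_trans; [|apply (bessel_t_sin_rhot p x x_range N _ HF2)]. right. apply rsum_ext; intros j _.
    unfold e, Cint. cbn [snd]. f_equal. apply rint_ext; intros. simpl. ring. }
  pose proof (rint_Fsum_sqr_le M). pose proof (rsum_xi_sqr_le N).
  assert (0 <= K1) by (unfold K1; pose proof (taylor_const_pos Om); pose proof PI_RGT_0;
                       pose proof F_L2_bound_ge0; nra).
  assert (0 <= PI ^ 3) by (apply pow_le; pose proof PI_RGT_0; lra).
  unfold gdiff_bound. fold K1. nra.
Qed.

Variable g : nat -> vec2.
Hypothesis g_eq_g : g_eq p lam alpha x psi g.

Lemma is_lim_Cint_Fsum n (i : bool) : (1 <= n)%nat ->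
  let gi := if i then snd (g n) else fst (g n) in
  let P (N : nat) := Cint x (fun t => (ccos_mul (rhoi p lam n i) t * F (S N) t)%C) in
  is_lim_seq (fun N => fst (P N)) (fst gi) /\ is_lim_seq (fun N => snd (P N)) (snd gi).
Proof.
  intros Hn gi P. destruct (g_eq_g n Hn) as [H0 H1].
  assert (Hs : @is_series _ C_R_NormedModule (gterm p lam alpha x psi n i) gi)
    by (destruct i; assumption).
  destruct (is_lim_Csum_of_is_series _ _ Hs) as [A1 A2].
  split; (eapply is_lim_seq_ext; [|eassumption]); intros N; unfold P; rewrite Csum_gterm; reflexivity.
Qed.

Lemma rsum_Cmod_g1_sqr_le L : rsum (fun j => Cmod (snd (g (S j))) ^ 2) L <= g1_bound p Om B.
Proof.
  apply (is_lim_seq_le_const (fun N => rsum (fun j =>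
    Cmod (Cint x (fun t => (ccos_mul (RtoC (rhot p (S j))) t * F (S N) t)%C)) ^ 2) L)).
  - intros N. apply rsum_Cint_cos_rhot_sqr_le.
  - apply is_lim_seq_rsum. intros j Hj.
    destruct (is_lim_Cint_Fsum (S j) true ltac:(lia)) as [A1 A2].
    apply is_lim_seq_sqr, is_lim_seq_Cmod; assumption.
Qed.

Lemma rsum_Cmod_gdiff_le L :
  rsum (fun j => Cmod (fst (g (S j)) - snd (g (S j)))) L <= gdiff_bound p Om B.
Proof.
  apply (is_lim_seq_le_const (fun N => rsum (fun j =>
    Cmod (gdiff_partial p lam alpha psi x (S N) (S j))) L)).
  - intros N. apply rsum_Cmod_gdiff_partial_le.
  - apply is_lim_seq_rsum. intros j Hj.
    destruct (is_lim_Cint_Fsum (S j) false ltac:(lia)) as [A1 A2].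
    destruct (is_lim_Cint_Fsum (S j) true ltac:(lia)) as [A3 A4].
    apply is_lim_seq_Cmod;
      [change (fst (fst (g (S j)) - snd (g (S j)))%C) with (fst (fst (g (S j))) - fst (snd (g (S j))))
      |change (snd (fst (g (S j)) - snd (g (S j)))%C) with (snd (fst (g (S j))) - snd (snd (g (S j))))];
      (eapply is_lim_seq_ext; [|apply is_lim_seq_minus'; eassumption]); intros N;
      rewrite gdiff_partial_eq; reflexivity.
Qed.

Lemma rsum_Cmod_g0_sqr_le L :
  rsum (fun j => Cmod (fst (g (S j))) ^ 2) L <= 2 * g1_bound p Om B + 2 * gdiff_bound p Om B ^ 2.
Proof.
  set (d := fun j => Cmod (fst (g (S j)) - snd (g (S j)))).
  set (c := gdiff_bound p Om B).
  assert (Hd : forall j, d j <= c).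
  { intros j. eapply Rle_trans; [|apply (rsum_Cmod_gdiff_le (S j))].
    apply (rsum_term_le d); [lia | intros; apply Cmod_ge_0]. }
  eapply Rle_trans.
  { apply (rsum_le _ (fun j => 2 * Cmod (snd (g (S j))) ^ 2 + 2 * c * d j)). intros j _.
    pose proof (Cmod_le_minus_add (fst (g (S j))) (snd (g (S j)))). fold (d j) in H.
    pose proof (Cmod_ge_0 (fst (g (S j)))); pose proof (Cmod_ge_0 (snd (g (S j)))).
    pose proof (Cmod_ge_0 (fst (g (S j)) - snd (g (S j)))). fold (d j) in H2.
    pose proof (Hd j). pose proof (pow2_ge_0 (d j - Cmod (snd (g (S j))))).
    assert (d j * d j <= c * d j) by (apply Rmult_le_compat_r; lra).
    assert (Cmod (fst (g (S j))) ^ 2 <= (d j + Cmod (snd (g (S j)))) ^ 2) by (apply pow_incr; lra).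
    nra. }
  rewrite rsum_plus, !rsum_scal.
  pose proof (rsum_Cmod_g1_sqr_le L). pose proof (rsum_Cmod_gdiff_le L).
  assert (0 <= c) by (eapply Rle_trans; [apply Cmod_ge_0 | apply (Hd 0%nat)]).
  fold d c in H0. nra.
Qed.

End PartialSumBounds.

Definition psit_bound Om := 2 * taylor_const Om * Om + PI + 1.

Lemma rhohat_is0_false p lam n : rhohat_is0 p lam n = false -> rhohat p lam n <> RtoC 0.
Proof.
  unfold rhohat_is0. destruct Req_EM_T as [H|H]; [discriminate|].
  intros _ E. apply H. rewrite E. apply Cmod_0.
Qed.

Lemma rhohat_is0_true p lam n : rhohat_is0 p lam n = true -> rhohat p lam n = RtoC 0.
Proof.
  unfold rhohat_is0. destruct Req_EM_T as [H|H]; [|discriminate].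
  intros _. apply Cmod_eq_0; auto.
Qed.

Lemma Rabs_mul_sin_le t r : 0 <= t -> Rabs (t * sin r) <= t.
Proof.
  intros Ht. rewrite Rabs_mult, (Rabs_right t) by lra.
  assert (Rabs (sin r) <= 1) by (apply Rabs_le; pose proof (SIN_bound r); lra).
  pose proof (Rabs_pos (sin r)). nra.
Qed.

(* When [rhohat_n <> 0], the first component of [psit_n] is a difference quotient
   [(cos (rho_n x) - cos (rhot_n x)) / rhohat_n], which [cos_rem] controls uniformly. *)
Lemma psit_le p lam x Om : 0 <= x <= PI -> forall n, Cmod (rhohat p lam n) <= Om ->
  Cmod (fst (psit p lam x n)) <= psit_bound Om /\ Cmod (snd (psit p lam x n)) <= psit_bound Om.
Proof.
  intros Hx n Hd.
  pose proof (taylor_const_pos Om). pose proof PI_RGT_0. pose proof (Cmod_ge_0 (rhohat p lam n)).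
  assert (HM1 : 1 <= psit_bound Om) by (unfold psit_bound; nra).
  assert (Hcos : Cmod (ccos (RtoC (rhot p n) * RtoC x)) <= 1).
  { change (ccos (RtoC (rhot p n) * RtoC x)) with (ccos_mul (RtoC (rhot p n)) x).
    rewrite ccos_mul_RtoC, Cmod_R. apply Rabs_le. pose proof (COS_bound (rhot p n * x)). lra. }
  pose proof (Rabs_mul_sin_le x (rhot p n * x) ltac:(lra)).
  unfold psit. destruct (rhohat_is0 p lam n) eqn:E; cbn [fst snd].
  - split; [|lra]. rewrite csin_RtoC, <- RtoC_mult, Cmod_R, Ropp_mult_distr_l_reverse, Rabs_Ropp.
    unfold psit_bound. nra.
  - apply rhohat_is0_false in E. set (d := rhohat p lam n) in *.
    unfold Tmat, mv. cbn [fst snd rhoi]. fold d. split.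
    2:{ replace (RtoC 0 * ccos (rho lam n * RtoC x) + RtoC 1 * ccos (RtoC (rhot p n) * RtoC x))%C
          with (ccos (RtoC (rhot p n) * RtoC x)) by ring. lra. }
    replace (/ d * ccos (rho lam n * RtoC x) + - / d * ccos (RtoC (rhot p n) * RtoC x))%C
      with (/ d * cos_rem p lam n x - RtoC (x * sin (rhot p n * x)))%C.
    2:{ unfold cos_rem. fold d. change (ccos (rho lam n * RtoC x)) with (ccos_mul (rho lam n) x).
        change (ccos (RtoC (rhot p n) * RtoC x)) with (ccos_mul (RtoC (rhot p n)) x).
        rewrite ccos_mul_RtoC. field. exact E. }
    eapply Rle_trans; [apply Cmod_minus_le|]. rewrite Cmod_mult, Cmod_inv, !Cmod_R by exact E.
    assert (Hdp : 0 < Cmod d) by (apply Cmod_gt_0; exact E).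
    destruct (cos_rem_le p lam Om n x Hd Hx) as [R1 R2]. fold d in R1, R2.
    pose proof (Cmod_le_Rabs_fst_snd (cos_rem p lam n x)).
    assert (/ Cmod d * Cmod (cos_rem p lam n x) <= 2 * taylor_const Om * Om).
    { apply Rmult_le_reg_l with (Cmod d); auto. rewrite <- Rmult_assoc, Rinv_r by lra.
      assert (Cmod d ^ 2 <= Cmod d * Om) by nra. nra. }
    unfold psit_bound. lra.
Qed.

(* [g_n = T_n^{-1} (psit_n - psi_n)], read off from [(E + H) psi = psit] and
   [H_nk = T_n Q_nk T_k^{-1}]. *)
Definition g_of_psi p lam x (psi : nat -> vec2) n : vec2 :=
  ((rhohat p lam n * (fst (psit p lam x n) - fst (psi n)) + (snd (psit p lam x n) - snd (psi n)))%C,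
   (snd (psit p lam x n) - snd (psi n))%C).

Lemma mv_mm A B v : mv (mm A B) v = mv A (mv B v).
Proof.
  destruct A as [[a b] [c d]], B as [[e f] [g h]], v as [v1 v2].
  unfold mv, mm; simpl. apply injective_projections; simpl; ring.
Qed.

Lemma Qt_rhohat_0 p lam alpha x n k j : rhohat p lam n = RtoC 0 ->
  Qt p lam alpha x n false k j = Qt p lam alpha x n true k j.
Proof.
  intros H. unfold Qt. f_equal. cbn [lami]. unfold Dt.
  assert (E : csqrt (lam n) = csqrt (RtoC (rhot p n * rhot p n))).
  { rewrite csqrt_RtoC_sqr by apply rhot_ge0. change (csqrt (lam n)) with (rho lam n).
    unfold rhohat in H.
    replace (rho lam n) with ((rho lam n - RtoC (rhot p n)) + RtoC (rhot p n))%C by ring.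
    rewrite H. ring. }
  rewrite E. reflexivity.
Qed.

Lemma g_eq_g_of_psi p lam alpha x psi :
  EpH_eq p lam alpha x psi (psit p lam x) -> g_eq p lam alpha x psi (g_of_psi p lam x psi).
Proof.
  intros HE n Hn. destruct (HE n Hn) as [Hf Hs].
  set (w := fun j => mv (Qmat p lam alpha x n (S j)) (mv (Tinv p lam (S j)) (psi (S j)))).
  change (fun j => fst (mv (Qmat p lam alpha x n (S j)) (mv (Tinv p lam (S j)) (psi (S j)))))
    with (fun j => fst (w j)).
  change (fun j => snd (mv (Qmat p lam alpha x n (S j)) (mv (Tinv p lam (S j)) (psi (S j)))))
    with (fun j => snd (w j)).
  set (L0 := (fst (psit p lam x n) - fst (psi n))%C) in *.
  set (L1 := (snd (psit p lam x n) - snd (psi n))%C) in *.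
  unfold Hmat in Hf, Hs. unfold g_of_psi; cbn [fst snd]. fold L0 L1.
  destruct (rhohat_is0 p lam n) eqn:E.
  - apply rhohat_is0_true in E.
    assert (Hs' : @is_series _ C_R_NormedModule (fun j => snd (w j)) L1).
    { eapply is_series_Cext; [|exact Hs]. intros j. cbv beta. rewrite mv_mm. reflexivity. }
    split; [|exact Hs'].
    rewrite E. replace (RtoC 0 * L0 + L1)%C with L1 by ring.
    eapply is_series_Cext; [|exact Hs']. intros j. unfold w, mv, Qmat. cbn [fst snd].
    rewrite !(Qt_rhohat_0 p lam alpha x n (S j)) by exact E. reflexivity.
  - apply rhohat_is0_false in E. set (d := rhohat p lam n) in *.
    assert (Hs' : @is_series _ C_R_NormedModule (fun j => snd (w j)) L1).
    { eapply is_series_Cext; [|exact Hs]. intros j. cbv beta. rewrite !mv_mm. unfold Tmat. fold d.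
      change (mv (Qmat p lam alpha x n (S j)) (mv (Tinv p lam (S j)) (psi (S j)))) with (w j).
      unfold mv at 1. cbn [fst snd]. ring. }
    split; [|exact Hs'].
    assert (Hf' : @is_series _ C_R_NormedModule (fun j => (/ d * fst (w j) + - / d * snd (w j))%C) L0).
    { eapply is_series_Cext; [|exact Hf]. intros j. cbv beta. rewrite !mv_mm. unfold Tmat. fold d.
      change (mv (Qmat p lam alpha x n (S j)) (mv (Tinv p lam (S j)) (psi (S j)))) with (w j).
      unfold mv at 1. cbn [fst snd]. reflexivity. }
    pose proof (is_series_Cplus _ _ _ _ (is_series_Cscal d _ _ Hf') Hs') as H.
    eapply is_series_Cext; [|exact H]. intros j. cbv beta. field. exact E.
Qed.

Lemma rsum_xi_sqr_le_of_in_BOmega p Om lam alpha :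
  in_BOmega p Om lam alpha -> forall M, rsum (fun j => xi p lam alpha (S j) ^ 2) M <= Om ^ 2.
Proof.
  intros [_ [Hex Hsq]] M.
  assert (Ha : forall j, 0 <= xi p lam alpha (S j) ^ 2) by (intros; apply pow2_ge_0).
  set (Sxi := Series (fun j => xi p lam alpha (S j) ^ 2)) in *.
  assert (H0 : 0 <= Sxi) by exact (rsum_le_Series _ Ha Hex 0%nat).
  assert (HS : Sxi <= Om ^ 2).
  { rewrite <- (pow2_sqrt Sxi) by exact H0. apply pow_incr. split; [apply sqrt_pos | exact Hsq]. }
  exact (Rle_trans _ _ _ (rsum_le_Series _ Ha Hex M) HS).
Qed.

Lemma psi_le_of_in_BOmegaK p Om K lam alpha x psi : 0 < Om ->
  in_BOmegaK p Om K lam alpha -> 0 <= x <= PI ->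
  bounded_seq psi -> EpH_eq p lam alpha x psi (psit p lam x) ->
  forall n, (1 <= n)%nat ->
    Cmod (fst (psi n)) <= K * psit_bound Om /\ Cmod (snd (psi n)) <= K * psit_bound Om.
Proof.
  intros HO [HBO HKinv] Hx Hb HE.
  destruct (HKinv x Hx) as [_ [_ Hinv]]. apply (Hinv psi _ Hb HE).
  intros n Hn. apply psit_le; auto.
  eapply Rle_trans; [apply (Cmod_rhohat_le_xi p lam alpha)|].
  eapply xi_le_Om; eauto. apply rsum_xi_sqr_le_of_in_BOmega; auto.
Qed.

Lemma le_1plus_of_sqr_le a c : 0 <= a -> a ^ 2 <= c -> a <= 1 + c.
Proof. intros Ha H. destruct (Rle_dec a 1); [assert (0 <= c) by nra; lra | nra]. Qed.

Lemma rsum_term_le_S (a : nat -> R) c n :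
  (forall j, 0 <= a j) -> (forall L, rsum (fun j => a (S j)) L <= c) -> (1 <= n)%nat -> a n <= c.
Proof.
  intros Ha Hc Hn. replace n with (S (n - 1)) by lia.
  eapply Rle_trans; [|apply (Hc n)].
  apply (rsum_term_le (fun j => a (S j))); [lia | auto].
Qed.

Lemma sqrt_Series_le_of_rsum_le (a : nat -> R) c :
  (forall j, 0 <= a j) -> (forall L, rsum a L <= c) -> ex_series a /\ sqrt (Series a) <= 1 + c.
Proof.
  intros Ha Hc. destruct (series_le_of_rsum_le a c Ha Hc) as [Hex Hle]. split; [exact Hex|].
  assert (0 <= Series a) by exact (rsum_le_Series a Ha Hex 0%nat).
  apply le_1plus_of_sqr_le; [apply sqrt_pos|]. rewrite pow2_sqrt; lra.
Qed.

Definition lemma3p5_const p Om K :=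
  let B := K * psit_bound Om in
  1 + B + 2 * g1_bound p Om B + gdiff_bound p Om B + 2 * gdiff_bound p Om B ^ 2.

Lemma lemma3p5_of_rsum_bounds (psi g : nat -> vec2) B c1 cd :
  0 <= B -> 0 <= c1 -> 0 <= cd ->
  (forall n, (1 <= n)%nat -> Cmod (fst (psi n)) <= B /\ Cmod (snd (psi n)) <= B) ->
  (forall L, rsum (fun j => Cmod (snd (g (S j))) ^ 2) L <= c1) ->
  (forall L, rsum (fun j => Cmod (fst (g (S j)) - snd (g (S j)))) L <= cd) ->
  (forall L, rsum (fun j => Cmod (fst (g (S j))) ^ 2) L <= 2 * c1 + 2 * cd ^ 2) ->
  let Cst := 1 + B + 2 * c1 + cd + 2 * cd ^ 2 in
    (forall n : nat, (1 <= n)%nat ->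
       Cmod (fst (psi n)) <= Cst /\ Cmod (snd (psi n)) <= Cst) /\
    (forall n : nat, (1 <= n)%nat ->
       Cmod (fst (g n)) <= Cst /\ Cmod (snd (g n)) <= Cst) /\
    (ex_series (fun j => Cmod (fst (g (S j))) ^ 2) /\
     sqrt (Series (fun j => Cmod (fst (g (S j))) ^ 2)) <= Cst) /\
    (ex_series (fun j => Cmod (snd (g (S j))) ^ 2) /\
     sqrt (Series (fun j => Cmod (snd (g (S j))) ^ 2)) <= Cst) /\
    (ex_series (fun j => Cmod (fst (g (S j)) - snd (g (S j)))) /\
     Series (fun j => Cmod (fst (g (S j)) - snd (g (S j)))) <= Cst).
Proof.
  intros HB Hc1 Hcd Hpsi G1 GD G0 Cst. pose proof (pow2_ge_0 cd).
  assert (Hsq : forall a : R, 0 <= a ^ 2) by (intros; apply pow2_ge_0).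
  split; [|split; [|split; [|split]]].
  - intros n Hn. destruct (Hpsi n Hn). unfold Cst. split; lra.
  - intros n Hn.
    assert (Cmod (snd (g n)) <= 1 + c1).
    { apply le_1plus_of_sqr_le; [apply Cmod_ge_0|].
      apply (rsum_term_le_S (fun j => Cmod (snd (g j)) ^ 2)); auto. }
    assert (Cmod (fst (g n) - snd (g n)) <= cd)
      by (apply (rsum_term_le_S (fun j => Cmod (fst (g j) - snd (g j)))); auto using Cmod_ge_0).
    pose proof (Cmod_le_minus_add (fst (g n)) (snd (g n))). unfold Cst. split; lra.
  - destruct (sqrt_Series_le_of_rsum_le _ _ (fun j => Hsq _) G0). unfold Cst. split; [auto | lra].
  - destruct (sqrt_Series_le_of_rsum_le _ _ (fun j => Hsq _) G1). unfold Cst. split; [auto | lra].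
  - destruct (series_le_of_rsum_le _ _ (fun j => Cmod_ge_0 _) GD). unfold Cst. split; [auto | lra].
Qed.

Theorem lemma3p5 :
  forall (p : nat) (Omega K : R), 0 < Omega -> 0 < K ->
  exists Cst : R,
  forall lam alpha : nat -> C, in_BOmegaK p Omega K lam alpha ->
  forall x : R, 0 <= x <= PI ->
  forall psi : nat -> vec2,
    bounded_seq psi -> EpH_eq p lam alpha x psi (psit p lam x) ->
  exists g : nat -> vec2,
    g_eq p lam alpha x psi g /\
    (* (1) *)
    (forall n : nat, (1 <= n)%nat ->
       Cmod (fst (psi n)) <= Cst /\ Cmod (snd (psi n)) <= Cst) /\
    (* (2) *)
    (forall n : nat, (1 <= n)%nat ->
       Cmod (fst (g n)) <= Cst /\ Cmod (snd (g n)) <= Cst) /\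
    (* (3) *)
    (ex_series (fun j => Cmod (fst (g (S j))) ^ 2) /\
     sqrt (Series (fun j => Cmod (fst (g (S j))) ^ 2)) <= Cst) /\
    (ex_series (fun j => Cmod (snd (g (S j))) ^ 2) /\
     sqrt (Series (fun j => Cmod (snd (g (S j))) ^ 2)) <= Cst) /\
    (* (4) *)
    (ex_series (fun j => Cmod (fst (g (S j)) - snd (g (S j)))) /\
     Series (fun j => Cmod (fst (g (S j)) - snd (g (S j)))) <= Cst).
Proof.
  intros p Om K HO HK. exists (lemma3p5_const p Om K).
  intros lam alpha HBK x Hx psi Hb HE.
  set (B := K * psit_bound Om).
  assert (HB : 0 <= B).
  { unfold B, psit_bound. pose proof (taylor_const_pos Om). pose proof PI_RGT_0.
    apply Rmult_le_pos; [lra|]. assert (0 <= 2 * taylor_const Om * Om) by nra. lra. }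
  pose proof (rsum_xi_sqr_le_of_in_BOmega _ _ _ _ (proj1 HBK)) as Hxi.
  pose proof (psi_le_of_in_BOmegaK _ _ _ _ _ _ _ HO HBK Hx Hb HE) as Hpsi. fold B in Hpsi.
  pose proof (g_eq_g_of_psi _ _ _ _ _ HE) as Hg.
  exists (g_of_psi p lam x psi). split; [exact Hg|].
  apply (lemma3p5_of_rsum_bounds psi _ B); auto.
  - apply g1_bound_ge0; auto.
  - apply gdiff_bound_ge0; auto.
  - apply (rsum_Cmod_g1_sqr_le p lam alpha psi Om B x); auto.
  - apply (rsum_Cmod_gdiff_le p lam alpha psi Om B x); auto.
  - apply (rsum_Cmod_g0_sqr_le p lam alpha psi Om B x); auto.
Qed.
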